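(* Let $n\ge2$, let $I\subseteq[0,\infty)$ be an interval with non-empty interior, let $\tilde{\mathbf{P}}\colon I\to\mathbb{R}^n$ be a generalized $n$-system and let $\epsilon>0$. Then there exists an $n$-system $\mathbf{P}$ on $I$ such that $\|\tilde{\mathbf{P}}(q)-\mathbf{P}(q)\|_\infty\le\epsilon$ for every $q\in I$.
   Context: Let $I\subseteq[0,\infty)$ be an interval with non-empty interior. A map $\mathbf{P}\colon I\to\mathbb{R}^n$ is continuous piecewise linear if it is continuous, the set $D$ of points of $I$ where it is not differentiable (including the endpoints of $I$ that lie in $I$) is discrete in $I$, and its derivative is locally constant on $I\setminus D$. An $n$-system on $I$ is a continuous piecewise linear map $\mathbf{P}=(P_1,\dots,P_n)\colon I\to\mathbb{R}^n$ such that: (S1) for each $q\in I$, $0\le P_1(q)\le\cdots\le P_n(q)$ and $P_1(q)+\cdots+P_n(q)=q$; (S2) on each non-empty open subinterval $H$ of $I$ on which $\mathbf{P}$ is differentiable, there is $r\in\{1,\dots,n\}$ such that $P_r$ has slope $1$ on $H$ and all $P_j$ with $j\ne r$ are constant on $H$; (S3) if $q$ is an interior point of $I$ where $\mathbf{P}$ is not differentiable and the integers $r,s$ with $P_r'(q^-)=P_s'(q^+)=1$ satisfy $r<s$, then $P_r(q)=P_{r+1}(q)=\cdots=P_s(q)$. A generalized $n$-system on $I$ is a continuous piecewise linear map $\mathbf{P}=(P_1,\dots,P_n)\colon I\to\mathbb{R}^n$ such that: (G1) for each $q\in I$, $0\le P_1(q)\le\cdots\le P_n(q)$ and $P_1(q)+\cdots+P_n(q)=q$;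 (G2) on each non-empty open subinterval $H$ of $I$ on which $\mathbf{P}$ is differentiable, there are integers $1\le \underline{r}\le\overline{r}\le n$ such that $P_{\underline r},\dots,P_{\overline r}$ coincide on $H$ and have slope $1/(\overline r-\underline r+1)$, while every other $P_j$ is constant on $H$; (G3) if $q$ is an interior point of $I$ where $\mathbf{P}$ is not differentiable, and $\underline r,\overline r,\underline s,\overline s$ are the integers with $P_j'(q^-)=1/(\overline r-\underline r+1)$ for $\underline r\le j\le\overline r$ and $P_j'(q^+)=1/(\overline s-\underline s+1)$ for $\underline s\le j\le \overline s$ (as in (G2) on the adjacent intervals), and if $\underline r<\overline s$, then $P_{\underline r}(q)=P_{\underline r+1}(q)=\cdots=P_{\overline s}(q)$. *)

From Stdlib Require Import Reals Lra List.
Open Scope R_scope.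

(* A map I -> R^n is represented by P : nat -> R -> R, where P j q is the
   j-th coordinate P_j(q); only indices 1 <= j <= n and arguments q in I
   are relevant. Subsets of R are predicates R -> Prop. *)

Definition is_interval (I : R -> Prop) : Prop :=
  forall x y z, I x -> I z -> x <= y <= z -> I y.

Definition interior_pt (I : R -> Prop) (q : R) : Prop :=
  exists d, d > 0 /\ forall x, Rabs (x - q) < d -> I x.

Definition admissible_interval (I : R -> Prop) : Prop :=
  is_interval I /\ (forall x, I x -> 0 <= x) /\ exists q, interior_pt I q.

Definition open_subinterval (I H : R -> Prop) : Prop :=
  is_interval H /\ (exists x, H x) /\ (forall x, H x -> interior_pt H x)
  /\ (forall x, H x -> I x).

Definition diff_at (n : nat) (P : nat -> R -> R) (q : R) : Prop :=
  forall j, (1 <= j <= n)%nat -> exists l, derivable_pt_lim (P j) q l.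

Definition nondiff_set (n : nat) (I : R -> Prop) (P : nat -> R -> R) (q : R)
  : Prop := I q /\ (~ interior_pt I q \/ ~ diff_at n P q).

Definition continuous_on (n : nat) (I : R -> Prop) (P : nat -> R -> R) : Prop :=
  forall j q, (1 <= j <= n)%nat -> I q ->
    forall eps, eps > 0 -> exists d, d > 0 /\
      forall x, I x -> Rabs (x - q) < d -> Rabs (P j x - P j q) < eps.

Definition discrete_in (I D : R -> Prop) : Prop :=
  forall q, I q -> exists d, d > 0 /\ exists l : list R,
    forall x, I x -> D x -> Rabs (x - q) < d -> In x l.

Definition cont_pw_linear (n : nat) (I : R -> Prop) (P : nat -> R -> R) : Prop :=
  continuous_on n I P /\
  discrete_in I (nondiff_set n I P) /\
  (forall q, I q -> ~ nondiff_set n I P q ->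
     exists d, d > 0 /\ forall q', I q' -> ~ nondiff_set n I P q' ->
       Rabs (q' - q) < d ->
       forall j l l', (1 <= j <= n)%nat ->
         derivable_pt_lim (P j) q l -> derivable_pt_lim (P j) q' l' -> l = l').

Definition slope_on (H : R -> Prop) (f : R -> R) (c : R) : Prop :=
  forall x y, H x -> H y -> f y - f x = c * (y - x).

Definition const_on (H : R -> Prop) (f : R -> R) : Prop :=
  forall x y, H x -> H y -> f x = f y.

Definition left_deriv (f : R -> R) (q l : R) : Prop :=
  forall eps, eps > 0 -> exists d, d > 0 /\
    forall x, q - d < x < q -> Rabs ((f x - f q) / (x - q) - l) < eps.
Definition right_deriv (f : R -> R) (q l : R) : Prop :=
  forall eps, eps > 0 -> exists d, d > 0 /\
    forall x, q < x < q + d -> Rabs ((f x - f q) / (x - q) - l) < eps.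

Definition cond1 (n : nat) (I : R -> Prop) (P : nat -> R -> R) : Prop :=
  forall q, I q ->
    0 <= P 1%nat q /\
    (forall j, (1 <= j < n)%nat -> P j q <= P (S j) q) /\
    sum_f 1 n (fun j => P j q) = q.

Definition n_system (n : nat) (I : R -> Prop) (P : nat -> R -> R) : Prop :=
  cont_pw_linear n I P /\
  cond1 n I P /\
  (forall H, open_subinterval I H -> (forall x, H x -> diff_at n P x) ->
     exists r, (1 <= r <= n)%nat /\ slope_on H (P r) 1 /\
       forall j, (1 <= j <= n)%nat -> j <> r -> const_on H (P j)) /\
  (forall q, interior_pt I q -> ~ diff_at n P q ->
     forall r s, (1 <= r <= n)%nat -> (1 <= s <= n)%nat ->
       left_deriv (P r) q 1 -> right_deriv (P s) q 1 -> (r < s)%nat ->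
       forall j, (r <= j <= s)%nat -> P j q = P r q).

Definition gen_n_system (n : nat) (I : R -> Prop) (P : nat -> R -> R) : Prop :=
  cont_pw_linear n I P /\
  cond1 n I P /\
  (forall H, open_subinterval I H -> (forall x, H x -> diff_at n P x) ->
     exists rl rh, (1 <= rl <= rh)%nat /\ (rh <= n)%nat /\
       (forall j, (rl <= j <= rh)%nat ->
          (forall x, H x -> P j x = P rl x) /\
          slope_on H (P j) (1 / INR (rh - rl + 1))) /\
       (forall j, (1 <= j <= n)%nat -> ~ (rl <= j <= rh)%nat -> const_on H (P j))) /\
  (forall q, interior_pt I q -> ~ diff_at n P q ->
     forall rl rh sl sh,
       (1 <= rl <= rh)%nat -> (rh <= n)%nat ->
       (1 <= sl <= sh)%nat -> (sh <= n)%nat ->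
       (forall j, (rl <= j <= rh)%nat -> left_deriv (P j) q (1 / INR (rh - rl + 1))) ->
       (forall j, (1 <= j <= n)%nat -> ~ (rl <= j <= rh)%nat -> left_deriv (P j) q 0) ->
       (forall j, (sl <= j <= sh)%nat -> right_deriv (P j) q (1 / INR (sh - sl + 1))) ->
       (forall j, (1 <= j <= n)%nat -> ~ (sl <= j <= sh)%nat -> right_deriv (P j) q 0) ->
       (rl < sh)%nat ->
       forall j, (rl <= j <= sh)%nat -> P j q = P rl q).

From Stdlib Require Import Reals Lra Lia Classical ClassicalEpsilon ZArith List.
Open Scope R_scope.

(* Where the generalized system [Pt] is differentiable, (G2) makes a block of [k] consecutive
   coordinates rise together with slope [1/k] while the others stay constant. On each maximal run
   [(a, b)] of such points the block is replaced by a staircase: its coordinates take turns, the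
   top one first, each rising with slope 1 for a time [h <= eps], so that after every round of [k]
   steps they are level again and equal to the block of [Pt]; in between they differ from it by at
   most [h]. When [b] is finite, [h] is chosen so that [(a, b)] consists of whole rounds, which
   makes the new map agree with [Pt] at both ends of every run, hence continuous. On either side
   of every point exactly one coordinate of the new map moves, with slope 1, and an n-system is
   recognized from these one-sided germs: (S3) comes from (G3) at the points where [Pt] is not
   differentiable, and inside a run from the order in which the staircase moves its coordinates. *)

Definition kron (j r : nat) : R := if Nat.eq_dec j r then 1 else 0.

Lemma kron_diag j : kron j j = 1.
Proof. unfold kron; destruct (Nat.eq_dec j j); congruence. Qed.

Lemma kron_offdiag j r : j <> r -> kron j r = 0.
Proof. unfold kron; destruct (Nat.eq_dec j r); congruence. Qed.

Lemma kron_eq1 j r : kron j r = 1 -> j = r.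
Proof. unfold kron; destruct (Nat.eq_dec j r); auto; lra. Qed.

Lemma Rabs_kron_mult j r x : Rabs (kron j r * x) <= Rabs x.
Proof.
  unfold kron; destruct (Nat.eq_dec j r).
  - rewrite Rmult_1_l; lra.
  - rewrite Rmult_0_l, Rabs_R0; apply Rabs_pos.
Qed.

Lemma eq_of_close (l c : R) : (forall e, e > 0 -> Rabs (c - l) < e) -> l = c.
Proof.
  intros H. destruct (Req_dec l c) as [|Hne]; auto.
  assert (He : Rabs (c - l) > 0) by (apply Rabs_pos_lt; lra).
  specialize (H _ He); lra.
Qed.

Lemma derivable_pt_lim_affine f x c d : d > 0 ->
  (forall y, Rabs (y - x) < d -> f y = f x + c * (y - x)) -> derivable_pt_lim f x c.
Proof.
  intros Hd Hf e He. exists (mkposreal d Hd). intros h Hh0 Hh. simpl in Hh.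
  rewrite (Hf (x + h)) by (replace (x + h - x) with h by ring; auto).
  replace ((f x + c * (x + h - x) - f x) / h - c) with 0 by (field; auto).
  rewrite Rabs_R0; auto.
Qed.

Lemma derivable_pt_lim_left_affine f q l c d : d > 0 -> derivable_pt_lim f q l ->
  (forall y, q - d < y <= q -> f y = f q + c * (y - q)) -> l = c.
Proof.
  intros Hd Hl Hf. apply eq_of_close. intros e He. destruct (Hl e He) as [del Hdel].
  assert (0 < Rmin d del) by (apply Rmin_glb_lt; [lra | apply cond_pos]).
  pose proof (Rmin_l d del); pose proof (Rmin_r d del).
  set (h := - (Rmin d del / 2)).
  specialize (Hdel h ltac:(unfold h; lra) ltac:(unfold h; rewrite Rabs_Ropp, Rabs_right; lra)).
  rewrite Hf in Hdel by (unfold h; lra).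
  replace ((f q + c * (q + h - q) - f q) / h - l) with (c - l) in Hdel by (field; unfold h; lra).
  exact Hdel.
Qed.

Lemma derivable_pt_lim_right_affine f q l c d : d > 0 -> derivable_pt_lim f q l ->
  (forall y, q <= y < q + d -> f y = f q + c * (y - q)) -> l = c.
Proof.
  intros Hd Hl Hf. apply eq_of_close. intros e He. destruct (Hl e He) as [del Hdel].
  assert (0 < Rmin d del) by (apply Rmin_glb_lt; [lra | apply cond_pos]).
  pose proof (Rmin_l d del); pose proof (Rmin_r d del).
  set (h := Rmin d del / 2).
  specialize (Hdel h ltac:(unfold h; lra) ltac:(unfold h; rewrite Rabs_right; lra)).
  rewrite Hf in Hdel by (unfold h; lra).
  replace ((f q + c * (q + h - q) - f q) / h - l) with (c - l) in Hdel by (field; unfold h; lra).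
  exact Hdel.
Qed.

Lemma left_deriv_left_affine f q l c d : d > 0 -> left_deriv f q l ->
  (forall y, q - d < y <= q -> f y = f q + c * (y - q)) -> l = c.
Proof.
  intros Hd Hl Hf. apply eq_of_close. intros e He. destruct (Hl e He) as [del [Hdel Hq]].
  assert (0 < Rmin d del) by (apply Rmin_glb_lt; lra).
  pose proof (Rmin_l d del); pose proof (Rmin_r d del).
  set (x := q - Rmin d del / 2).
  specialize (Hq x ltac:(unfold x; lra)). rewrite Hf in Hq by (unfold x; lra).
  replace ((f q + c * (x - q) - f q) / (x - q) - l) with (c - l) in Hq by (field; unfold x; lra).
  exact Hq.
Qed.

Lemma right_deriv_right_affine f q l c d : d > 0 -> right_deriv f q l ->
  (forall y, q <= y < q + d -> f y = f q + c * (y - q)) -> l = c.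
Proof.
  intros Hd Hl Hf. apply eq_of_close. intros e He. destruct (Hl e He) as [del [Hdel Hq]].
  assert (0 < Rmin d del) by (apply Rmin_glb_lt; lra).
  pose proof (Rmin_l d del); pose proof (Rmin_r d del).
  set (x := q + Rmin d del / 2).
  specialize (Hq x ltac:(unfold x; lra)). rewrite Hf in Hq by (unfold x; lra).
  replace ((f q + c * (x - q) - f q) / (x - q) - l) with (c - l) in Hq by (field; unfold x; lra).
  exact Hq.
Qed.

Lemma left_deriv_of_left_affine f q c d : d > 0 ->
  (forall y, q - d < y <= q -> f y = f q + c * (y - q)) -> left_deriv f q c.
Proof.
  intros Hd Hf e He. exists d. split; auto. intros x Hx. rewrite Hf by lra.
  replace ((f q + c * (x - q) - f q) / (x - q) - c) with 0 by (field; lra).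
  rewrite Rabs_R0; lra.
Qed.

Lemma right_deriv_of_right_affine f q c d : d > 0 ->
  (forall y, q <= y < q + d -> f y = f q + c * (y - q)) -> right_deriv f q c.
Proof.
  intros Hd Hf e He. exists d. split; auto. intros x Hx. rewrite Hf by lra.
  replace ((f q + c * (x - q) - f q) / (x - q) - c) with 0 by (field; lra).
  rewrite Rabs_R0; lra.
Qed.

(* The supremum of the initial segment of [x, y] on which [Q] holds cannot stop before [y]. *)
Lemma interval_propagate_right (H Q : R -> Prop) x y :
  is_interval H ->
  (forall z, H z -> exists d, d > 0 /\ forall w, H w -> Rabs (w - z) < d -> (Q w <-> Q z)) ->
  H x -> H y -> x <= y -> Q x -> Q y.
Proof.
  intros HH Hloc Hx Hy Hxy Qx.
  set (E := fun t => x <= t <= y /\ forall s, x <= s <= t -> Q s).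
  assert (Ex : E x) by (split; [lra | intros s Hs; replace s with x by lra; auto]).
  destruct (completeness E ltac:(exists y; intros t Ht; apply Ht) ltac:(exists x; auto))
    as [c [Hub Hlub]].
  assert (Hxc : x <= c) by (apply Hub, Ex).
  assert (Hcy : c <= y) by (apply Hlub; intros t Ht; apply Ht).
  assert (Hbelow : forall s, x <= s < c -> Q s).
  { intros s Hs. apply NNPP; intros Hns.
    assert (c <= s); [|lra]. apply Hlub. intros t [Ht Hts].
    destruct (Rle_lt_dec t s); auto. exfalso; apply Hns, Hts; lra. }
  destruct (Hloc c (HH x c y Hx Hy ltac:(lra))) as [d [Hd Hc]].
  assert (Qc : Q c).
  { destruct (Rle_lt_or_eq_dec _ _ Hxc) as [Hlt | <-]; auto.
    pose proof (Rmax_l x (c - d / 2)); pose proof (Rmax_r x (c - d / 2)).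
    assert (Rmax x (c - d / 2) < c) by (apply Rmax_lub_lt; lra).
    apply (Hc (Rmax x (c - d / 2))).
    - apply (HH x _ y); auto; lra.
    - apply Rabs_def1; lra.
    - apply Hbelow; lra. }
  destruct (Rle_lt_or_eq_dec _ _ Hcy) as [Hlt | <-]; auto. exfalso.
  pose proof (Rmin_l (c + d / 2) y); pose proof (Rmin_r (c + d / 2) y).
  assert (Hct : c < Rmin (c + d / 2) y) by (apply Rmin_glb_lt; lra).
  enough (Et : E (Rmin (c + d / 2) y)) by (specialize (Hub _ Et); lra).
  split; [lra|]. intros s Hs.
  destruct (Rlt_or_le s c); [apply Hbelow; lra|].
  apply (Hc s); [apply (HH x s y); auto; lra | apply Rabs_def1; lra | exact Qc].
Qed.

Lemma interval_propagate (H Q : R -> Prop) x y :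
  is_interval H ->
  (forall z, H z -> exists d, d > 0 /\ forall w, H w -> Rabs (w - z) < d -> (Q w <-> Q z)) ->
  H x -> H y -> Q x -> Q y.
Proof.
  intros HH Hloc Hx Hy Qx. destruct (Rle_lt_dec x y).
  - apply (interval_propagate_right H Q x y); auto.
  - apply NNPP; intros Hny.
    apply (interval_propagate_right H (fun z => ~ Q z) y x); auto; try lra.
    intros z Hz. destruct (Hloc z Hz) as [d [Hd Hw]].
    exists d; split; auto. intros w Hw' Hwz. specialize (Hw w Hw' Hwz). tauto.
Qed.

(** * Affine germs *)

Definition left_affine (n : nat) (I : R -> Prop) (P : nat -> R -> R) (q d : R) (r : nat) : Prop :=
  forall x, q - d < x <= q -> I x /\
    forall j, (1 <= j <= n)%nat -> P j x = P j q + kron j r * (x - q).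
Definition right_affine (n : nat) (I : R -> Prop) (P : nat -> R -> R) (q d : R) (r : nat) : Prop :=
  forall x, q <= x < q + d -> I x /\
    forall j, (1 <= j <= n)%nat -> P j x = P j q + kron j r * (x - q).
Definition local_affine (n : nat) (P : nat -> R -> R) (q d : R) (r : nat) : Prop :=
  forall x, Rabs (x - q) < d ->
    forall j, (1 <= j <= n)%nat -> P j x = P j q + kron j r * (x - q).

Definition left_germ (n : nat) (I : R -> Prop) (P : nat -> R -> R) (q : R) (r : nat) : Prop :=
  exists d, d > 0 /\ left_affine n I P q d r.
Definition right_germ (n : nat) (I : R -> Prop) (P : nat -> R -> R) (q : R) (r : nat) : Prop :=
  exists d, d > 0 /\ right_affine n I P q d r.

Section AffineGerms.
Variables (n : nat) (I : R -> Prop) (P : nat -> R -> R).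

Lemma left_germ_unique q r r' : (1 <= r <= n)%nat ->
  left_germ n I P q r -> left_germ n I P q r' -> r = r'.
Proof.
  intros Hr [d [Hd H]] [d' [Hd' H']].
  assert (0 < Rmin d d') by (apply Rmin_glb_lt; lra).
  pose proof (Rmin_l d d'); pose proof (Rmin_r d d').
  set (x := q - Rmin d d' / 2).
  destruct (H x ltac:(unfold x; lra)) as [_ E]. destruct (H' x ltac:(unfold x; lra)) as [_ E'].
  specialize (E r Hr); specialize (E' r Hr). rewrite kron_diag in E.
  apply kron_eq1, (Rmult_eq_reg_r (x - q)); [lra | unfold x; lra].
Qed.

Lemma right_germ_unique q r r' : (1 <= r <= n)%nat ->
  right_germ n I P q r -> right_germ n I P q r' -> r = r'.
Proof.
  intros Hr [d [Hd H]] [d' [Hd' H']].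
  assert (0 < Rmin d d') by (apply Rmin_glb_lt; lra).
  pose proof (Rmin_l d d'); pose proof (Rmin_r d d').
  set (x := q + Rmin d d' / 2).
  destruct (H x ltac:(unfold x; lra)) as [_ E]. destruct (H' x ltac:(unfold x; lra)) as [_ E'].
  specialize (E r Hr); specialize (E' r Hr). rewrite kron_diag in E.
  apply kron_eq1, (Rmult_eq_reg_r (x - q)); [lra | unfold x; lra].
Qed.

Lemma local_affine_unique q d d' r r' : d > 0 -> d' > 0 -> (1 <= r <= n)%nat ->
  local_affine n P q d r -> local_affine n P q d' r' -> r = r'.
Proof.
  intros Hd Hd' Hr H H'.
  assert (0 < Rmin d d') by (apply Rmin_glb_lt; lra).
  pose proof (Rmin_l d d'); pose proof (Rmin_r d d').
  set (x := q + Rmin d d' / 2).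
  assert (Hx : Rabs (x - q) = Rmin d d' / 2) by (unfold x; rewrite Rabs_right; lra).
  specialize (H x ltac:(lra) r Hr); specialize (H' x ltac:(lra) r Hr). rewrite kron_diag in H.
  apply kron_eq1, (Rmult_eq_reg_r (x - q)); [lra | unfold x; lra].
Qed.

Lemma local_affine_shift q d r y : local_affine n P q d r -> Rabs (y - q) < d / 2 ->
  local_affine n P y (d / 2) r.
Proof.
  intros H Hy x Hx j Hj.
  assert (Hxq : Rabs (x - q) < d).
  { replace (x - q) with ((x - y) + (y - q)) by ring.
    pose proof (Rabs_triang (x - y) (y - q)); pose proof (Rabs_pos (y - q)); lra. }
  pose proof (Rabs_pos (y - q)).
  rewrite (H x Hxq j Hj), (H y ltac:(lra) j Hj). ring.
Qed.

Lemma left_affine_local q d r x : left_affine n I P q d r -> q - d < x < q ->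
  exists e, e > 0 /\ (forall y, Rabs (y - x) < e -> I y) /\ local_affine n P x e r.
Proof.
  intros H Hx. exists (Rmin (x - (q - d)) (q - x)).
  pose proof (Rmin_l (x - (q - d)) (q - x)); pose proof (Rmin_r (x - (q - d)) (q - x)).
  split; [apply Rmin_glb_lt; lra | split].
  - intros y Hy. apply Rabs_def2 in Hy. apply H; lra.
  - intros y Hy j Hj. apply Rabs_def2 in Hy.
    destruct (H y ltac:(lra)) as [_ Ey]. destruct (H x ltac:(lra)) as [_ Ex].
    rewrite (Ey j Hj), (Ex j Hj). ring.
Qed.

Lemma right_affine_local q d r x : right_affine n I P q d r -> q < x < q + d ->
  exists e, e > 0 /\ (forall y, Rabs (y - x) < e -> I y) /\ local_affine n P x e r.
Proof.
  intros H Hx. exists (Rmin (q + d - x) (x - q)).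
  pose proof (Rmin_l (q + d - x) (x - q)); pose proof (Rmin_r (q + d - x) (x - q)).
  split; [apply Rmin_glb_lt; lra | split].
  - intros y Hy. apply Rabs_def2 in Hy. apply H; lra.
  - intros y Hy j Hj. apply Rabs_def2 in Hy.
    destruct (H y ltac:(lra)) as [_ Ey]. destruct (H x ltac:(lra)) as [_ Ex].
    rewrite (Ey j Hj), (Ex j Hj). ring.
Qed.

Lemma local_affine_derivable q d r j : d > 0 -> (1 <= j <= n)%nat ->
  local_affine n P q d r -> derivable_pt_lim (P j) q (kron j r).
Proof. intros Hd Hj H. apply (derivable_pt_lim_affine _ _ _ d Hd). intros y Hy; apply H; auto. Qed.

Lemma local_affine_regular q d r : d > 0 -> (forall y, Rabs (y - q) < d -> I y) ->
  local_affine n P q d r -> ~ nondiff_set n I P q.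
Proof.
  intros Hd HI H [_ [Hint | Hdiff]].
  - apply Hint. exists d; auto.
  - apply Hdiff. intros j Hj. exists (kron j r). apply (local_affine_derivable q d); auto.
Qed.

Lemma interior_of_germs q r s : left_germ n I P q r -> right_germ n I P q s -> interior_pt I q.
Proof.
  intros [d1 [Hd1 H1]] [d2 [Hd2 H2]]. exists (Rmin d1 d2).
  pose proof (Rmin_l d1 d2); pose proof (Rmin_r d1 d2).
  split; [apply Rmin_glb_lt; lra|]. intros x Hx. apply Rabs_def2 in Hx.
  destruct (Rle_lt_dec x q); [apply H1 | apply H2]; lra.
Qed.

End AffineGerms.

Lemma interior_pt_mem I q : interior_pt I q -> I q.
Proof. intros [d [Hd H]]. apply H. rewrite Rminus_diag, Rabs_R0. lra. Qed.

Lemma interior_pt_sides I q : interior_pt I q -> (exists x, I x /\ x < q) /\ (exists x, I x /\ q < x).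
Proof.
  intros [d [Hd H]]. split; [exists (q - d / 2) | exists (q + d / 2)]; split; try lra; apply H;
  apply Rabs_def1; lra.
Qed.

Section SystemOfGerms.
Variables (n : nat) (I : R -> Prop) (P : nat -> R -> R).
Hypothesis P_cond1 : cond1 n I P.
Hypothesis P_left_germ : forall q, I q -> (exists x, I x /\ x < q) ->
  exists r, (1 <= r <= n)%nat /\ left_germ n I P q r.
Hypothesis P_right_germ : forall q, I q -> (exists x, I x /\ q < x) ->
  exists r, (1 <= r <= n)%nat /\ right_germ n I P q r.
Hypothesis P_germ_compat : forall q r s, I q -> left_germ n I P q r -> right_germ n I P q s ->
  (r < s)%nat -> forall j, (r <= j <= s)%nat -> P j q = P r q.

Lemma left_radius q : I q ->
  exists d r, d > 0 /\ ((exists x, I x /\ x < q) -> left_affine n I P q d r).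
Proof.
  intros Hq. destruct (classic (exists x, I x /\ x < q)) as [Hl | Hnl].
  - destruct (P_left_germ q Hq Hl) as [r [_ [d [Hd H]]]]. exists d, r; auto.
  - exists 1, 0%nat. split; [lra | tauto].
Qed.

Lemma right_radius q : I q ->
  exists d r, d > 0 /\ ((exists x, I x /\ q < x) -> right_affine n I P q d r).
Proof.
  intros Hq. destruct (classic (exists x, I x /\ q < x)) as [Hl | Hnl].
  - destruct (P_right_germ q Hq Hl) as [r [_ [d [Hd H]]]]. exists d, r; auto.
  - exists 1, 0%nat. split; [lra | tauto].
Qed.

Lemma punctured_nbhd_affine q : I q -> exists d, d > 0 /\
  forall x, I x -> Rabs (x - q) < d -> x <> q -> exists e r, e > 0 /\
    (forall y, Rabs (y - x) < e -> I y) /\ local_affine n P x e r /\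
    forall j, (1 <= j <= n)%nat -> P j x = P j q + kron j r * (x - q).
Proof.
  intros Hq. destruct (left_radius q Hq) as [dL [rL [HdL HL]]].
  destruct (right_radius q Hq) as [dR [rR [HdR HR]]].
  exists (Rmin dL dR). pose proof (Rmin_l dL dR); pose proof (Rmin_r dL dR).
  split; [apply Rmin_glb_lt; lra|]. intros x Hx Hxq Hne. apply Rabs_def2 in Hxq.
  destruct (Rdichotomy _ _ Hne) as [Hlt | Hgt].
  - assert (HLq : left_affine n I P q dL rL) by (apply HL; eauto).
    destruct (left_affine_local n I P q dL rL x HLq ltac:(lra)) as [e [He [HIe Hloc]]].
    exists e, rL. repeat split; auto. apply (HLq x ltac:(lra)).
  - assert (HRq : right_affine n I P q dR rR) by (apply HR; eauto).
    destruct (right_affine_local n I P q dR rR x HRq ltac:(lra)) as [e [He [HIe Hloc]]].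
    exists e, rR. repeat split; auto. apply (HRq x ltac:(lra)).
Qed.

Lemma local_affine_at_regular q : interior_pt I q -> diff_at n P q ->
  exists d r, d > 0 /\ (1 <= r <= n)%nat /\ local_affine n P q d r.
Proof.
  intros Hint Hdiff. destruct (interior_pt_sides I q Hint) as [Hl Hr].
  pose proof (interior_pt_mem I q Hint) as Hq.
  destruct (P_left_germ q Hq Hl) as [r [Hr_ [dL [HdL HL]]]].
  destruct (P_right_germ q Hq Hr) as [s [_ [dR [HdR HR]]]].
  destruct (Hdiff r Hr_) as [l Hlim].
  assert (Hsr : s = r).
  { assert (l = kron r r).
    { apply (derivable_pt_lim_left_affine (P r) q l _ dL); auto.
      intros y Hy; apply (proj2 (HL y Hy)); auto. }
    assert (l = kron r s).
    { apply (derivable_pt_lim_right_affine (P r) q l _ dR); auto.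
      intros y Hy; apply (proj2 (HR y Hy)); auto. }
    rewrite kron_diag in *. symmetry; apply kron_eq1; lra. }
  subst s. exists (Rmin dL dR), r. pose proof (Rmin_l dL dR); pose proof (Rmin_r dL dR).
  split; [apply Rmin_glb_lt; lra | split; auto]. intros x Hx j Hj. apply Rabs_def2 in Hx.
  destruct (Rle_lt_dec x q); [apply (HL x) | apply (HR x)]; auto; lra.
Qed.

Lemma germs_continuous : continuous_on n I P.
Proof.
  intros j q Hj Hq e He. destruct (punctured_nbhd_affine q Hq) as [d [Hd Hnear]].
  exists (Rmin d e). pose proof (Rmin_l d e); pose proof (Rmin_r d e).
  split; [apply Rmin_glb_lt; lra|]. intros x Hx Hxq.
  destruct (Req_dec x q) as [-> | Hne]; [rewrite Rminus_diag, Rabs_R0; lra|].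
  destruct (Hnear x Hx ltac:(lra) Hne) as [e' [r [_ [_ [_ Ex]]]]].
  rewrite (Ex j Hj). replace (P j q + kron j r * (x - q) - P j q) with (kron j r * (x - q)) by ring.
  pose proof (Rabs_kron_mult j r (x - q)). lra.
Qed.

Lemma germs_nondiff_discrete : discrete_in I (nondiff_set n I P).
Proof.
  intros q Hq. destruct (punctured_nbhd_affine q Hq) as [d [Hd Hnear]].
  exists d; split; auto. exists (q :: nil). intros x Hx HD Hxq. left.
  apply NNPP; intros Hne. destruct (Hnear x Hx Hxq (not_eq_sym Hne)) as [e [r [He [HIe [Hloc _]]]]].
  exact (local_affine_regular n I P x e r He HIe Hloc HD).
Qed.

Lemma germs_derivative_locally_constant q : I q -> ~ nondiff_set n I P q ->
  exists d, d > 0 /\ forall q', I q' -> ~ nondiff_set n I P q' -> Rabs (q' - q) < d ->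
    forall j l l', (1 <= j <= n)%nat ->
      derivable_pt_lim (P j) q l -> derivable_pt_lim (P j) q' l' -> l = l'.
Proof.
  intros Hq HnD.
  assert (Hint : interior_pt I q) by (apply NNPP; intro; apply HnD; split; auto).
  assert (Hdiff : diff_at n P q) by (apply NNPP; intro; apply HnD; split; auto).
  destruct (local_affine_at_regular q Hint Hdiff) as [d [r [Hd [_ Hloc]]]].
  exists (d / 2). split; [lra|]. intros q' _ _ Hq' j l l' Hj Hl Hl'.
  assert (E : l = kron j r).
  { apply (uniqueness_limite (P j) q); auto. apply (local_affine_derivable n P q d); auto. }
  assert (E' : l' = kron j r).
  { apply (uniqueness_limite (P j) q'); auto.
    apply (local_affine_derivable n P q' (d / 2)); [lra | auto |].
    apply (local_affine_shift n P q); auto. }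
  lra.
Qed.

Lemma germs_one_moving_coordinate H : open_subinterval I H -> (forall x, H x -> diff_at n P x) ->
  exists r, (1 <= r <= n)%nat /\ slope_on H (P r) 1 /\
    forall j, (1 <= j <= n)%nat -> j <> r -> const_on H (P j).
Proof.
  intros [HHi [[x0 Hx0] [HHo HHI]]] Hdiff.
  assert (Hloc : forall x, H x -> exists d r, d > 0 /\ (1 <= r <= n)%nat /\ local_affine n P x d r).
  { intros x Hx. apply local_affine_at_regular; auto.
    destruct (HHo x Hx) as [d [Hd Hd']]. exists d; auto. }
  destruct (Hloc x0 Hx0) as [d0 [r [Hd0 [Hr Hloc0]]]].
  (* the moving coordinate [r] at [x0] is the moving coordinate everywhere on [H] *)
  set (moves := fun x => exists d, d > 0 /\ local_affine n P x d r).
  assert (Hmoves : forall x, H x -> moves x).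
  { intros x Hx. apply (interval_propagate H moves x0 x); auto; [|exists d0; auto].
    intros z Hz. destruct (Hloc z Hz) as [d [s [Hd [Hs Hlz]]]].
    exists (d / 2); split; [lra|]. intros w _ Hw.
    assert (Hlw : local_affine n P w (d / 2) s) by (apply (local_affine_shift n P z); auto).
    split; intros [d' [Hd' Hl']].
    - exists d; split; auto.
      replace r with s; auto. apply (local_affine_unique n P w (d / 2) d'); auto; lra.
    - exists (d / 2); split; [lra|].
      replace r with s; auto. apply (local_affine_unique n P z d d'); auto. }
  assert (Hdiffs : forall j x, (1 <= j <= n)%nat -> H x -> P j x - P j x0 = kron j r * (x - x0)).
  { intros j x Hj Hx.
    enough (P j x - kron j r * x = P j x0 - kron j r * x0) by lra.
    apply (interval_propagate H (fun y => P j y - kron j r * y = P j x0 - kron j r * x0) x0 x);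
      auto.
    intros z Hz. destruct (Hmoves z Hz) as [d [Hd Hlz]].
    exists d; split; auto. intros w _ Hw. rewrite (Hlz w Hw j Hj).
    replace (P j z + kron j r * (w - z) - kron j r * w) with (P j z - kron j r * z) by ring. tauto. }
  exists r. split; auto. split.
  - intros x y Hx Hy. pose proof (Hdiffs r x Hr Hx); pose proof (Hdiffs r y Hr Hy).
    rewrite kron_diag in *. lra.
  - intros j Hj Hjr x y Hx Hy. pose proof (Hdiffs j x Hj Hx); pose proof (Hdiffs j y Hj Hy).
    rewrite kron_offdiag in * by auto. lra.
Qed.

Lemma germs_compatible q : interior_pt I q -> forall r s, (1 <= r <= n)%nat -> (1 <= s <= n)%nat ->
  left_deriv (P r) q 1 -> right_deriv (P s) q 1 -> (r < s)%nat ->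
  forall j, (r <= j <= s)%nat -> P j q = P r q.
Proof.
  intros Hint r s Hr Hs Hld Hrd Hrs j Hj. destruct (interior_pt_sides I q Hint) as [Hl Hr'].
  pose proof (interior_pt_mem I q Hint) as Hq.
  destruct (P_left_germ q Hq Hl) as [rL [_ HLg]]. destruct (P_right_germ q Hq Hr') as [rR [_ HRg]].
  assert (r = rL).
  { destruct HLg as [d [Hd HL]]. apply kron_eq1. symmetry.
    apply (left_deriv_left_affine (P r) q 1 _ d); auto. intros y Hy; apply (proj2 (HL y Hy)); auto. }
  assert (s = rR).
  { destruct HRg as [d [Hd HR]]. apply kron_eq1. symmetry.
    apply (right_deriv_right_affine (P s) q 1 _ d); auto. intros y Hy; apply (proj2 (HR y Hy)); auto. }
  subst. apply (P_germ_compat q rL rR); auto.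
Qed.

Theorem n_system_of_germs : n_system n I P.
Proof.
  split; [split; [|split] | split; [auto | split]].
  - exact germs_continuous.
  - exact germs_nondiff_discrete.
  - exact germs_derivative_locally_constant.
  - exact germs_one_moving_coordinate.
  - intros q Hint _. apply germs_compatible; auto.
Qed.

End SystemOfGerms.

(** * Staircases *)

Definition stage (k : nat) (t : Z) : nat := Z.to_nat (t mod Z.of_nat k).

(* Rounds of [k] unit steps: on [t, t + 1] only coordinate [k - 1 - stage k t] rises, with
   slope 1, and the coordinates above it have already risen during the current round. *)
Definition stair_piece (k p : nat) (t : Z) (w : R) : R :=
  IZR (t / Z.of_nat k) + (if (k - stage k t <=? p)%nat then 1 else 0)
  + kron p (k - 1 - stage k t) * (w - IZR t).

Definition stair (k p : nat) (w : R) : R := stair_piece k p (Zfloor w) w.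

Lemma sum_f_R0_indicator_ge c K :
  sum_f_R0 (fun p => if (c <=? p)%nat then 1 else 0) K = INR (K + 1 - c).
Proof.
  induction K as [|K IH].
  - simpl. destruct c; simpl; lra.
  - rewrite tech5, IH. destruct (Nat.leb_spec c (S K)).
    + replace (S K + 1 - c)%nat with (S (K + 1 - c)) by lia. rewrite S_INR; lra.
    + replace (S K + 1 - c)%nat with (K + 1 - c)%nat by lia. lra.
Qed.

Lemma sum_f_R0_kron c K : sum_f_R0 (fun p => kron p c) K = if (c <=? K)%nat then 1 else 0.
Proof.
  induction K as [|K IH].
  - unfold kron. destruct c; simpl; lra.
  - rewrite tech5, IH. unfold kron.
    destruct (Nat.eq_dec (S K) c); destruct (Nat.leb_spec c K); destruct (Nat.leb_spec c (S K));
      try lia; lra.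
Qed.

Lemma sum_f_block n rl rh (h : nat -> R) : (1 <= rl)%nat -> (rl <= rh)%nat -> (rh <= n)%nat ->
  sum_f 1 n (fun j => if ((rl <=? j)%nat && (j <=? rh)%nat)%bool then h (j - rl)%nat else 0) =
  sum_f_R0 h (rh - rl).
Proof.
  intros H1 H2 H3. unfold sum_f.
  set (F := fun i => if ((rl <=? i + 1)%nat && (i + 1 <=? rh)%nat)%bool then h (i + 1 - rl)%nat else 0).
  assert (Hpartial : forall N, sum_f_R0 F N =
    if (N + 1 <? rl)%nat then 0 else sum_f_R0 h (Nat.min (N + 1) rh - rl)).
  { induction N as [|N IH].
    - change (sum_f_R0 F 0) with (F 0%nat). unfold F.
      destruct (Nat.ltb_spec (0 + 1) rl); destruct (Nat.leb_spec rl (0 + 1));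
        destruct (Nat.leb_spec (0 + 1) rh); simpl andb; try lia; try reflexivity.
      replace (0 + 1 - rl)%nat with 0%nat by lia.
      replace (Nat.min (0 + 1) rh - rl)%nat with 0%nat by lia. reflexivity.
    - rewrite tech5, IH. unfold F.
      destruct (Nat.ltb_spec (N + 1) rl); destruct (Nat.ltb_spec (S N + 1) rl);
      destruct (Nat.leb_spec rl (S N + 1)); destruct (Nat.leb_spec (S N + 1) rh); simpl andb;
        try lia.
      + lra.
      + replace (Nat.min (S N + 1) rh - rl)%nat with 0%nat by lia.
        replace (S N + 1 - rl)%nat with 0%nat by lia. simpl; lra.
      + replace (Nat.min (S N + 1) rh - rl)%nat with (S (Nat.min (N + 1) rh - rl)) by lia.
        rewrite tech5. replace (S N + 1 - rl)%nat with (S (Nat.min (N + 1) rh - rl)) by lia.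
        reflexivity.
      + replace (Nat.min (S N + 1) rh) with (Nat.min (N + 1) rh) by lia. lra. }
  change (sum_f_R0 F (n - 1) = sum_f_R0 h (rh - rl)). rewrite Hpartial.
  destruct (Nat.ltb_spec (n - 1 + 1) rl); [lia|]. f_equal. lia.
Qed.

Section Staircase.
Variable k : nat.
Hypothesis k_pos : (1 <= k)%nat.

Lemma stage_lt t : (stage k t < k)%nat.
Proof. unfold stage. pose proof (Z.mod_pos_bound t (Z.of_nat k) ltac:(lia)). lia. Qed.

Lemma Z_div_stage t : t = (Z.of_nat k * (t / Z.of_nat k) + Z.of_nat (stage k t))%Z.
Proof.
  unfold stage. pose proof (Z.mod_pos_bound t (Z.of_nat k) ltac:(lia)).
  rewrite Z2Nat.id by lia. apply Z_div_mod_eq_full.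
Qed.

Lemma IZR_div_stage t : IZR t = INR k * IZR (t / Z.of_nat k) + INR (stage k t).
Proof. rewrite (Z_div_stage t) at 1. rewrite plus_IZR, mult_IZR, <- !INR_IZR_INZ. ring. Qed.

Lemma stage_succ_lt t : (stage k t + 1 < k)%nat ->
  stage k (t + 1) = (stage k t + 1)%nat /\ ((t + 1) / Z.of_nat k = t / Z.of_nat k)%Z.
Proof.
  intros H. pose proof (Z_div_stage t).
  assert (Hq : ((t + 1) / Z.of_nat k)%Z = (t / Z.of_nat k)%Z).
  { symmetry; apply (Z.div_unique _ _ _ (Z.of_nat (stage k t + 1))); lia. }
  split; [|exact Hq]. unfold stage at 1.
  rewrite <- (Z.mod_unique (t + 1) (Z.of_nat k) (t / Z.of_nat k) (Z.of_nat (stage k t + 1))); lia.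
Qed.

Lemma stage_succ_wrap t : (stage k t + 1 = k)%nat ->
  stage k (t + 1) = 0%nat /\ ((t + 1) / Z.of_nat k = t / Z.of_nat k + 1)%Z.
Proof.
  intros H. pose proof (Z_div_stage t). split.
  - unfold stage. rewrite <- (Z.mod_unique (t + 1) (Z.of_nat k) (t / Z.of_nat k + 1) 0); lia.
  - symmetry. apply (Z.div_unique _ _ _ 0); lia.
Qed.

Lemma stage_pred t :
  (stage k t = 0%nat -> stage k (t - 1) = (k - 1)%nat) /\
  ((1 <= stage k t)%nat -> stage k (t - 1) = (stage k t - 1)%nat).
Proof.
  pose proof (stage_lt (t - 1)).
  destruct (Nat.eq_dec (stage k (t - 1) + 1) k) as [E | E].
  - pose proof (proj1 (stage_succ_wrap (t - 1) E)) as Hs.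
    replace (t - 1 + 1)%Z with t in Hs by ring. rewrite Hs. split; intros; lia.
  - pose proof (proj1 (stage_succ_lt (t - 1) ltac:(lia))) as Hs.
    replace (t - 1 + 1)%Z with t in Hs by ring. rewrite Hs. split; intros; lia.
Qed.

Lemma stair_piece_succ p t : (p < k)%nat ->
  stair_piece k p (t + 1) (IZR t + 1) = stair_piece k p t (IZR t + 1).
Proof.
  intros Hp. pose proof (stage_lt t). unfold stair_piece, kron. rewrite plus_IZR.
  destruct (Nat.eq_dec (stage k t + 1) k) as [E | E].
  - destruct (stage_succ_wrap t E) as [-> ->]. rewrite plus_IZR.
    destruct (Nat.leb_spec (k - 0) p); destruct (Nat.leb_spec (k - stage k t) p);
    destruct (Nat.eq_dec p (k - 1 - 0)); destruct (Nat.eq_dec p (k - 1 - stage k t)); try lia; lra.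
  - destruct (stage_succ_lt t ltac:(lia)) as [-> ->].
    destruct (Nat.leb_spec (k - (stage k t + 1)) p); destruct (Nat.leb_spec (k - stage k t) p);
    destruct (Nat.eq_dec p (k - 1 - (stage k t + 1))); destruct (Nat.eq_dec p (k - 1 - stage k t));
      try lia; lra.
Qed.

Lemma stair_eq_piece p t w : (p < k)%nat -> IZR t <= w <= IZR t + 1 ->
  stair k p w = stair_piece k p t w.
Proof.
  intros Hp [H1 H2]. unfold stair. destruct (Rle_lt_or_eq_dec _ _ H2) as [Hlt | ->].
  - rewrite (Zfloor_eq t w); auto.
  - rewrite (Zfloor_eq (t + 1)); [apply stair_piece_succ; auto | rewrite plus_IZR; lra].
Qed.

Lemma stair_piece_affine p t w w' :
  stair_piece k p t w - stair_piece k p t w' = kron p (k - 1 - stage k t) * (w - w').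
Proof. unfold stair_piece. ring. Qed.

Lemma stair_piece_bounds p t w : IZR t <= w <= IZR t + 1 ->
  IZR (t / Z.of_nat k) <= stair_piece k p t w <= IZR (t / Z.of_nat k) + 1.
Proof.
  intros Hw. unfold stair_piece, kron. pose proof (stage_lt t).
  destruct (Nat.leb_spec (k - stage k t) p); destruct (Nat.eq_dec p (k - 1 - stage k t));
    try lia; lra.
Qed.

Lemma stair_bounds p w :
  IZR (Zfloor w / Z.of_nat k) <= stair k p w <= IZR (Zfloor w / Z.of_nat k) + 1.
Proof. apply stair_piece_bounds. pose proof (Zfloor_bound w). lra. Qed.

Lemma stair_mono p w : (p + 1 < k)%nat -> stair k p w <= stair k (p + 1) w.
Proof.
  intros Hp. unfold stair, stair_piece, kron. pose proof (Zfloor_bound w).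
  pose proof (stage_lt (Zfloor w)). set (s := stage k (Zfloor w)) in *.
  destruct (Nat.leb_spec (k - s) p); destruct (Nat.eq_dec p (k - 1 - s));
  destruct (Nat.leb_spec (k - s) (p + 1)); destruct (Nat.eq_dec (p + 1) (k - 1 - s)); try lia; lra.
Qed.

Lemma stair_sum w : sum_f_R0 (fun p => stair k p w) (k - 1) = w.
Proof.
  unfold stair, stair_piece. set (t := Zfloor w). pose proof (stage_lt t).
  rewrite !sum_plus, sum_cte, <- scal_sum, sum_f_R0_indicator_ge, sum_f_R0_kron.
  destruct (Nat.leb_spec (k - 1 - stage k t) (k - 1)); [|lia].
  replace (S (k - 1)) with k by lia. replace (k - 1 + 1 - (k - stage k t))%nat with (stage k t) by lia.
  pose proof (IZR_div_stage t). lra.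
Qed.

Lemma stair_deviation_sum c w : sum_f_R0 (fun p => c * (stair k p w - w / INR k)) (k - 1) = 0.
Proof.
  assert (INR k > 0) by (apply lt_0_INR; lia).
  rewrite (sum_eq _ (fun p => (stair k p w + - (w / INR k)) * c)) by (intros; ring).
  rewrite <- scal_sum, sum_plus, sum_cte, stair_sum. replace (S (k - 1)) with k by lia.
  field. lra.
Qed.

Lemma stair_near p w : Rabs (stair k p w - w / INR k) <= 1.
Proof.
  pose proof (Zfloor_bound w) as Hb. pose proof (stair_bounds p w).
  set (t := Zfloor w) in *. pose proof (IZR_div_stage t). pose proof (stage_lt t).
  assert (Hk0 : INR k > 0) by (apply lt_0_INR; lia).
  assert (Hs : INR (stage k t) + 1 <= INR k).
  { rewrite <- S_INR. apply le_INR. lia. }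
  pose proof (pos_INR (stage k t)).
  assert (IZR (t / Z.of_nat k) <= w / INR k < IZR (t / Z.of_nat k) + 1).
  { split; [apply Rmult_le_reg_r with (INR k) | apply Rmult_lt_reg_r with (INR k)]; auto;
    unfold Rdiv; rewrite Rmult_assoc, Rinv_l, Rmult_1_r by lra; nra. }
  apply Rabs_le. lra.
Qed.

Lemma stair_nonneg p w : 0 <= w -> 0 <= stair k p w.
Proof.
  intros Hw. pose proof (stair_bounds p w). pose proof (Zfloor_bound w).
  assert (Ht : (0 <= Zfloor w)%Z) by (apply Zfloor_lub; simpl; lra).
  assert (Hd : (0 <= Zfloor w / Z.of_nat k)%Z) by (apply Z.div_pos; lia).
  apply IZR_le in Hd. lra.
Qed.

Lemma stair_le_rounds p w N : w < INR k * INR N -> stair k p w <= INR N.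
Proof.
  intros Hw. pose proof (stair_bounds p w). pose proof (Zfloor_bound w).
  assert (Ht : (Zfloor w < Z.of_nat k * Z.of_nat N)%Z).
  { apply lt_IZR. rewrite mult_IZR, <- !INR_IZR_INZ. lra. }
  assert (Hd : (Zfloor w / Z.of_nat k <= Z.of_nat N - 1)%Z).
  { assert (Zfloor w / Z.of_nat k < Z.of_nat N)%Z by (apply Z.div_lt_upper_bound; lia). lia. }
  apply IZR_le in Hd. rewrite minus_IZR, <- INR_IZR_INZ in Hd. simpl in Hd. lra.
Qed.

Lemma stair_piece_round_start p t : (p < k)%nat -> stage k t = 0%nat ->
  stair_piece k p t (IZR t) = IZR (t / Z.of_nat k).
Proof.
  intros Hp Hs. unfold stair_piece. rewrite Hs.
  destruct (Nat.leb_spec (k - 0) p); [lia | ring].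
Qed.

Lemma stair_piece_origin p : (p < k)%nat -> stair_piece k p 0 0 = 0.
Proof.
  intros Hp. rewrite (stair_piece_round_start p 0 Hp) by (unfold stage; rewrite Zmod_0_l; reflexivity).
  rewrite Zdiv_0_l. reflexivity.
Qed.

Lemma stage_last_round N :
  stage k (Z.of_nat k * Z.of_nat N - 1) = (k - 1)%nat.
Proof.
  unfold stage.
  rewrite <- (Z.mod_unique _ (Z.of_nat k) (Z.of_nat N - 1) (Z.of_nat k - 1)); lia.
Qed.

Lemma stair_piece_round_end p N : (p < k)%nat ->
  stair_piece k p (Z.of_nat k * Z.of_nat N - 1) (INR k * INR N) = INR N.
Proof.
  intros Hp. set (t := (Z.of_nat k * Z.of_nat N - 1)%Z).
  assert (Ht : IZR t + 1 = INR k * INR N).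
  { unfold t. rewrite minus_IZR, mult_IZR, <- !INR_IZR_INZ. simpl; ring. }
  rewrite <- Ht, <- (stair_eq_piece p t) by (auto; lra).
  rewrite (stair_eq_piece p (t + 1)) by (auto; rewrite plus_IZR; simpl; lra).
  rewrite <- plus_IZR, stair_piece_round_start; auto.
  - unfold t. replace (Z.of_nat k * Z.of_nat N - 1 + 1)%Z with (Z.of_nat N * Z.of_nat k)%Z by ring.
    rewrite Z_div_mult by lia. rewrite <- INR_IZR_INZ. reflexivity.
  - unfold t, stage. replace (Z.of_nat k * Z.of_nat N - 1 + 1)%Z with (Z.of_nat N * Z.of_nat k)%Z by ring.
    rewrite Z_mod_mult. reflexivity.
Qed.

End Staircase.

(** * The approximating n-system *)

Lemma list_separated (l : list R) q :
  exists e, e > 0 /\ forall y, In y l -> y <> q -> e <= Rabs (y - q).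
Proof.
  induction l as [|y l [e [He H]]].
  - exists 1. split; [lra | intros y []].
  - destruct (Req_dec y q) as [Hy | Hy].
    + exists e. split; auto. intros z [<- | Hz] Hzq; [contradiction | auto].
    + exists (Rmin e (Rabs (y - q))). split; [apply Rmin_glb_lt; [lra | apply Rabs_pos_lt; lra]|].
      intros z [<- | Hz] Hzq; [apply Rmin_r|]. eapply Rle_trans; [apply Rmin_l | auto].
Qed.

Lemma le_of_le_right_limit a x0 V c k : a < x0 -> k > 0 ->
  (forall x, a < x <= x0 -> c <= V + (x - a) / k) -> c <= V.
Proof.
  intros Hax Hk H. apply Rnot_lt_le. intros Hlt.
  pose proof (Rmin_l (x0 - a) (k * (c - V) / 2)); pose proof (Rmin_r (x0 - a) (k * (c - V) / 2)).
  set (m := Rmin (x0 - a) (k * (c - V) / 2)) in *.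
  assert (Hm : m > 0) by (apply Rmin_glb_lt; [lra | apply Rdiv_lt_0_compat; nra]).
  specialize (H (a + m) ltac:(lra)). replace (a + m - a) with m in H by ring.
  assert (m / k <= (c - V) / 2).
  { apply Rmult_le_reg_r with k; auto. unfold Rdiv. rewrite Rmult_assoc, Rinv_l by lra. lra. }
  lra.
Qed.

Lemma div_bounds u h lo hi : h > 0 -> h * lo <= u <= h * hi -> lo <= u / h <= hi.
Proof. intros Hh Hu. assert (u = h * (u / h)) by (field; lra). split; nra. Qed.

Section Approximation.
Variables (n : nat) (I : R -> Prop) (Pt : nat -> R -> R) (eps : R).
Hypothesis I_admissible : admissible_interval I.
Hypothesis Pt_generalized : gen_n_system n I Pt.
Hypothesis eps_pos : eps > 0.

Definition regular (x : R) : Prop := I x /\ ~ nondiff_set n I Pt x.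

Lemma regular_diff x : regular x -> diff_at n Pt x.
Proof. intros [Hx HnD]. apply NNPP; intro; apply HnD; split; auto. Qed.

Lemma regular_interior x : regular x -> interior_pt I x.
Proof. intros [Hx HnD]. apply NNPP; intro; apply HnD; split; auto. Qed.

Lemma punctured_nbhd_regular q : I q ->
  exists d, d > 0 /\ forall x, I x -> Rabs (x - q) < d -> x <> q -> regular x.
Proof.
  intros Hq. destruct Pt_generalized as [[_ [Hdisc _]] _].
  destruct (Hdisc q Hq) as [d [Hd [l Hl]]]. destruct (list_separated l q) as [e [He Hsep]].
  exists (Rmin d e). pose proof (Rmin_l d e); pose proof (Rmin_r d e).
  split; [apply Rmin_glb_lt; auto|]. intros x Hx Hxq Hne. split; auto. intros HD.
  specialize (Hsep x (Hl x Hx HD ltac:(lra)) Hne). lra.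
Qed.

Lemma regular_nbhd q : regular q -> exists d, d > 0 /\ forall x, Rabs (x - q) < d -> regular x.
Proof.
  intros Hreg. destruct (regular_interior q Hreg) as [d1 [Hd1 H1]].
  destruct (punctured_nbhd_regular q (proj1 Hreg)) as [d2 [Hd2 H2]].
  exists (Rmin d1 d2). pose proof (Rmin_l d1 d2); pose proof (Rmin_r d1 d2).
  split; [apply Rmin_glb_lt; auto|]. intros x Hx.
  destruct (Req_dec x q) as [-> | Hne]; auto. apply H2; auto; [apply H1|]; lra.
Qed.

Definition run (a x : R) : Prop := a < x /\ forall y, a < y <= x -> regular y.

Lemma run_regular a x : run a x -> regular x.
Proof. intros [H1 H2]. apply H2; lra. Qed.

Lemma run_down a x y : run a x -> a < y <= x -> run a y.
Proof. intros [H1 H2] Hy. split; [lra|]. intros z Hz; apply H2; lra. Qed.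

Lemma run_open a x : run a x -> exists d, d > 0 /\ forall y, Rabs (y - x) < d -> run a y.
Proof.
  intros Hrun. destruct (regular_nbhd x (run_regular a x Hrun)) as [d [Hd H]].
  destruct Hrun as [Hax Hrun]. exists (Rmin d (x - a)).
  pose proof (Rmin_l d (x - a)); pose proof (Rmin_r d (x - a)).
  split; [apply Rmin_glb_lt; lra|]. intros y Hy. apply Rabs_def2 in Hy.
  split; [lra|]. intros z Hz. destruct (Rle_lt_dec z x); [apply Hrun; lra | apply H, Rabs_def1; lra].
Qed.

Lemma run_open_subinterval a x0 : run a x0 -> open_subinterval I (run a).
Proof.
  intros Hx0. split; [|split; [eauto | split]].
  - intros x y z Hx Hz Hy. apply (run_down a z); auto. destruct Hx; lra.
  - intros x Hx. destruct (run_open a x Hx) as [d [Hd H]]. exists d; auto.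
  - intros x Hx. apply (run_regular a x Hx).
Qed.

(* [a] is the supremum of the irregular points below [q]; [-1] is one of them since [I] lies in
   [0, +oo). *)
Lemma run_start_exists q : regular q -> exists a, ~ regular a /\ run a q.
Proof.
  intros Hq. destruct I_admissible as [_ [Ipos _]].
  set (S := fun y => y < q /\ ~ regular y).
  assert (Sm1 : S (-1)).
  { split; [pose proof (Ipos q (proj1 Hq)); lra | intros [HI _]; specialize (Ipos _ HI); lra]. }
  destruct (completeness S ltac:(exists q; intros y [Hy _]; lra) ltac:(exists (-1); auto))
    as [a [Hub Hlub]].
  assert (Hrun : forall y, a < y <= q -> regular y).
  { intros y Hy. apply NNPP; intros Hny.
    destruct (Rle_lt_or_eq_dec y q (proj2 Hy)) as [Hlt | ->]; [|contradiction].
    specialize (Hub y (conj Hlt Hny)). lra. }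
  destruct (regular_nbhd q Hq) as [d [Hd Hnb]].
  assert (Haq : a <= q - d).
  { apply Hlub. intros y [Hy Hny]. apply Rnot_lt_le; intros Hlt.
    apply Hny, Hnb, Rabs_def1; lra. }
  exists a. split; [|split; [lra | auto]]. intros Ha.
  destruct (regular_nbhd a Ha) as [e [He Hnba]].
  enough (a <= a - e) by lra. apply Hlub. intros y [Hy Hny]. apply Rnot_lt_le; intros Hlt.
  destruct (Rle_lt_dec y a); [apply Hny, Hnba, Rabs_def1; lra | specialize (Hub y (conj Hy Hny)); lra].
Qed.

Definition run_start (q : R) : R := epsilon (inhabits 0) (fun a => ~ regular a /\ run a q).

Lemma run_start_spec q : regular q -> ~ regular (run_start q) /\ run (run_start q) q.
Proof.
  intros Hq. apply (epsilon_spec (inhabits 0) (fun a => ~ regular a /\ run a q)), run_start_exists, Hq.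
Qed.

Lemma run_start_unique a x : ~ regular a -> run a x -> run_start x = a.
Proof.
  intros Ha Hrun. destruct (run_start_spec x (run_regular a x Hrun)) as [Hb [Hbx Hbrun]].
  destruct Hrun as [Hax Hrun].
  destruct (Rtotal_order (run_start x) a) as [Hlt | [Heq | Hgt]]; auto.
  - exfalso; apply Ha, Hbrun; lra.
  - exfalso; apply Hb, Hrun; lra.
Qed.

Lemma run_after_irregular q : I q -> ~ regular q -> (exists y, I y /\ q < y) ->
  exists e, e > 0 /\ forall x, q < x < q + e -> run q x.
Proof.
  intros Hq Hnq [y0 [Hy0 Hqy0]]. destruct (punctured_nbhd_regular q Hq) as [d [Hd Hiso]].
  destruct I_admissible as [Iint _].
  exists (Rmin d (y0 - q)). pose proof (Rmin_l d (y0 - q)); pose proof (Rmin_r d (y0 - q)).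
  split; [apply Rmin_glb_lt; lra|]. intros x Hx. split; [lra|]. intros z Hz.
  apply Hiso; [apply (Iint q z y0); auto; lra | apply Rabs_def1; lra | intro; lra].
Qed.

Lemma run_before_irregular q : I q -> ~ regular q -> (exists y, I y /\ y < q) ->
  exists a e, e > 0 /\ ~ regular a /\ (forall x, q - e < x < q -> run a x) /\ is_lub (run a) q.
Proof.
  intros Hq Hnq [y0 [Hy0 Hy0q]]. destruct (punctured_nbhd_regular q Hq) as [d [Hd Hiso]].
  destruct I_admissible as [Iint _].
  pose proof (Rmin_l d (q - y0)); pose proof (Rmin_r d (q - y0)).
  set (e := Rmin d (q - y0)) in *. assert (He : e > 0) by (apply Rmin_glb_lt; lra).
  assert (Hreg : forall x, q - e < x < q -> regular x).
  { intros x Hx. apply Hiso; [apply (Iint y0 x q); auto; lra | apply Rabs_def1; lra | intro; lra]. }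
  destruct (run_start_spec (q - e / 2) (Hreg (q - e / 2) ltac:(lra))) as [Ha [Hax1 Hrun1]].
  set (a := run_start (q - e / 2)) in *.
  assert (Hrun : forall x, q - e / 2 <= x < q -> run a x).
  { intros x Hx. split; [lra|]. intros z Hz.
    destruct (Rle_lt_dec z (q - e / 2)); [apply Hrun1; lra | apply Hreg; lra]. }
  exists a, (e / 2). split; [lra | split; [auto | split]].
  - intros x Hx. apply Hrun; lra.
  - split.
    + intros z [Haz Hz]. apply Rnot_lt_le; intros Hlt. apply Hnq, Hz; lra.
    + intros b Hb. apply Rnot_lt_le; intros Hlt.
      specialize (Hb (Rmax (q - e / 2) ((b + q) / 2))).
      pose proof (Rmax_l (q - e / 2) ((b + q) / 2)); pose proof (Rmax_r (q - e / 2) ((b + q) / 2)).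
      assert (Rmax (q - e / 2) ((b + q) / 2) < q) by (apply Rmax_lub_lt; lra).
      specialize (Hb (Hrun (Rmax (q - e / 2) ((b + q) / 2)) ltac:(lra))). lra.
Qed.

Definition block_spec (a : R) (rl rh : nat) : Prop :=
  (1 <= rl <= rh)%nat /\ (rh <= n)%nat /\
  (forall j, (rl <= j <= rh)%nat ->
     (forall x, run a x -> Pt j x = Pt rl x) /\ slope_on (run a) (Pt j) (1 / INR (rh - rl + 1))) /\
  (forall j, (1 <= j <= n)%nat -> ~ (rl <= j <= rh)%nat -> const_on (run a) (Pt j)).

Definition block (a : R) : nat * nat :=
  epsilon (inhabits (1%nat, 1%nat)) (fun p => block_spec a (fst p) (snd p)).
Definition block_lo (a : R) : nat := fst (block a).
Definition block_hi (a : R) : nat := snd (block a).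
Definition block_len (a : R) : nat := (block_hi a - block_lo a + 1)%nat.
Definition in_block (a : R) (j : nat) : bool := ((block_lo a <=? j)%nat && (j <=? block_hi a)%nat)%bool.

Lemma block_spec_holds a x0 : run a x0 -> block_spec a (block_lo a) (block_hi a).
Proof.
  intros Hx0. apply (epsilon_spec (inhabits (1%nat, 1%nat)) (fun p => block_spec a (fst p) (snd p))).
  destruct Pt_generalized as [_ [_ [HG2 _]]].
  destruct (HG2 (run a) (run_open_subinterval a x0 Hx0)) as [rl [rh H]].
  - intros x Hx. apply regular_diff, (run_regular a x Hx).
  - exists (rl, rh). exact H.
Qed.

Lemma block_range a x0 : run a x0 ->
  (1 <= block_lo a <= block_hi a)%nat /\ (block_hi a <= n)%nat /\ (1 <= block_len a)%nat.
Proof. intros Hx0. destruct (block_spec_holds a x0 Hx0) as [H1 [H2 _]]. unfold block_len. lia. Qed.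

Lemma in_block_spec a j : in_block a j = true <-> (block_lo a <= j <= block_hi a)%nat.
Proof. unfold in_block. rewrite Bool.andb_true_iff, !Nat.leb_le. tauto. Qed.

Lemma in_block_false a j : in_block a j = false -> ~ (block_lo a <= j <= block_hi a)%nat.
Proof. intros E Hj. apply in_block_spec in Hj. congruence. Qed.

Definition run_base (a x0 : R) : R := Pt (block_lo a) x0 - (x0 - a) / INR (block_len a).

Definition run_value (a x0 : R) (j : nat) (x : R) : R :=
  if in_block a j then run_base a x0 + (x - a) / INR (block_len a) else Pt j x0.

Definition run_slope (a : R) (j : nat) : R := if in_block a j then / INR (block_len a) else 0.

Lemma run_value_affine a x0 j x y : run_value a x0 j x = run_value a x0 j y + run_slope a j * (x - y).
Proof. unfold run_value, run_slope. destruct (in_block a j); unfold Rdiv; ring. Qed.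

Lemma run_slope_bounds a x0 j : run a x0 -> 0 <= run_slope a j <= 1.
Proof.
  intros H0. unfold run_slope. destruct (in_block a j); [|lra].
  destruct (block_range a x0 H0) as [_ [_ Hk]].
  assert (1 <= INR (block_len a)) by (apply (le_INR 1); auto).
  split; [apply Rlt_le, Rinv_0_lt_compat; lra | rewrite <- Rinv_1; apply Rinv_le_contravar; lra].
Qed.

Lemma Pt_on_run a x0 x j : run a x0 -> run a x -> (1 <= j <= n)%nat -> Pt j x = run_value a x0 j x.
Proof.
  intros H0 Hx Hj. destruct (block_spec_holds a x0 H0) as [Hr [_ [Hblk Hconst]]].
  unfold run_value, run_base. destruct (in_block a j) eqn:E.
  - apply in_block_spec in E. destruct (Hblk j E) as [Heq Hsl].
    pose proof (Hsl x0 x H0 Hx) as Hs. rewrite (Heq x0 H0) in Hs.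
    assert (Hk : INR (block_len a) > 0) by (apply lt_0_INR; unfold block_len; lia).
    unfold block_len in *. set (k := INR (block_hi a - block_lo a + 1)) in *.
    replace ((x - a) / k) with ((x0 - a) / k + 1 / k * (x - x0)) by (field; lra). lra.
  - apply (Hconst j Hj); auto. rewrite <- in_block_spec, E. discriminate.
Qed.

(* Continuity of [Pt] carries the affine formula of a run to the endpoints of the run lying in [I]. *)
Lemma Pt_run_boundary a x0 j q : (1 <= j <= n)%nat -> I q -> run a x0 ->
  (forall d, d > 0 -> exists x, run a x /\ Rabs (x - q) < d) -> Pt j q = run_value a x0 j q.
Proof.
  intros Hj Hq H0 Hnear. symmetry. apply eq_of_close. intros e He.
  destruct Pt_generalized as [[Hcont _] _].
  destruct (Hcont j q Hj Hq (e / 2) ltac:(lra)) as [d [Hd Hc]].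
  destruct (Hnear (Rmin d (e / 2)) ltac:(apply Rmin_glb_lt; lra)) as [x [Hx Hxq]].
  pose proof (Rmin_l d (e / 2)); pose proof (Rmin_r d (e / 2)).
  specialize (Hc x (proj1 (run_regular a x Hx)) ltac:(lra)).
  pose proof (run_slope_bounds a x0 j H0).
  assert (Hu : Rabs (run_slope a j * (x - q)) <= Rabs (x - q)).
  { rewrite Rabs_mult, (Rabs_right (run_slope a j)) by lra. pose proof (Rabs_pos (x - q)). nra. }
  replace (Pt j q - run_value a x0 j q) with (- (Pt j x - Pt j q) + run_slope a j * (x - q))
    by (rewrite (Pt_on_run a x0 x j H0 Hx Hj), (run_value_affine a x0 j x q); ring).
  eapply Rle_lt_trans; [apply Rabs_triang|]. rewrite Rabs_Ropp. lra.
Qed.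

(* When the run is bounded, the step divides its length into a whole number of rounds of
   [block_len a] steps, so that the staircase is level again at the end of the run. *)
Definition step_spec (a h : R) : Prop := h > 0 /\ h <= eps /\
  forall b, is_lub (run a) b -> exists N : nat, (1 <= N)%nat /\ b - a = INR (block_len a) * INR N * h.

Definition step (a : R) : R := epsilon (inhabits 1) (step_spec a).

Lemma step_spec_holds a x0 : run a x0 -> step_spec a (step a).
Proof.
  intros Hx0. apply (epsilon_spec (inhabits 1) (step_spec a)).
  destruct (block_range a x0 Hx0) as [_ [_ Hk]].
  assert (Hk0 : INR (block_len a) > 0) by (apply lt_0_INR; lia).
  destruct (classic (exists b, is_lub (run a) b)) as [[b Hb] | Hnb].
  - assert (Hba : b > a) by (destruct Hb as [Hub _]; specialize (Hub _ Hx0); destruct Hx0; lra).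
    destruct (archimed_cor1 (INR (block_len a) * eps / (b - a))) as [N [HN HN0]].
    { apply Rdiv_lt_0_compat; nra. }
    assert (HNp : INR N > 0) by (apply lt_0_INR; lia).
    exists ((b - a) / (INR (block_len a) * INR N)). split; [|split].
    + apply Rdiv_lt_0_compat; nra.
    + apply Rmult_lt_compat_r with (r := (b - a) / INR (block_len a)) in HN;
        [|apply Rdiv_lt_0_compat; lra].
      replace (INR (block_len a) * eps / (b - a) * ((b - a) / INR (block_len a))) with eps in HN
        by (field; lra).
      replace (/ INR N * ((b - a) / INR (block_len a))) with ((b - a) / (INR (block_len a) * INR N)) in HN
        by (field; lra).
      lra.
    + intros b' Hb'. rewrite <- (is_lub_u _ _ _ Hb Hb'). exists N. split; [lia | field; lra].
  - exists eps. split; [lra | split; [lra|]]. intros b Hb. exfalso; eauto.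
Qed.

Definition stair_pos (a x : R) : R := (x - a) / step a.

(* [run_base a x] is the value the block of [Pt] would have at the start [a] of the run, so [Pstair]
   agrees with [Pt] at the start of every round. *)
Definition Pstair (j : nat) (x : R) : R :=
  if excluded_middle_informative (regular x) then
    if in_block (run_start x) j
    then run_base (run_start x) x + step (run_start x) *
           stair (block_len (run_start x)) (j - block_lo (run_start x)) (stair_pos (run_start x) x)
    else Pt j x
  else Pt j x.

Lemma Pstair_irregular j x : ~ regular x -> Pstair j x = Pt j x.
Proof. intros H. unfold Pstair. destruct (excluded_middle_informative _); tauto. Qed.

Lemma run_base_on_run a x0 x : run a x0 -> run a x -> run_base a x = run_base a x0.
Proof.
  intros H0 Hx. destruct (block_range a x0 H0) as [Hr [Hrn _]].
  pose proof (Pt_on_run a x0 x (block_lo a) H0 Hx ltac:(lia)) as E.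
  unfold run_value in E. replace (in_block a (block_lo a)) with true in E
    by (symmetry; apply in_block_spec; lia).
  unfold run_base at 1. rewrite E. ring.
Qed.

Lemma Pstair_on_run a x0 x j : ~ regular a -> run a x0 -> run a x -> (1 <= j <= n)%nat ->
  Pstair j x = if in_block a j
    then run_base a x0 + step a * stair (block_len a) (j - block_lo a) (stair_pos a x) else Pt j x0.
Proof.
  intros Ha H0 Hx Hj. unfold Pstair.
  destruct (excluded_middle_informative _) as [_ | Hn]; [|exfalso; apply Hn, (run_regular a x Hx)].
  rewrite (run_start_unique a x Ha Hx), (run_base_on_run a x0 x H0 Hx).
  pose proof (Pt_on_run a x0 x j H0 Hx Hj) as E. unfold run_value in E.
  destruct (in_block a j); auto.
Qed.

Definition moving_coord (a : R) (t : Z) : nat := (block_hi a - stage (block_len a) t)%nat.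

Lemma moving_coord_range a x0 t : run a x0 ->
  (1 <= moving_coord a t <= n)%nat /\ (block_lo a <= moving_coord a t <= block_hi a)%nat.
Proof.
  intros H0. destruct (block_range a x0 H0) as [Hr [Hrn Hk]].
  pose proof (stage_lt (block_len a) Hk t). unfold moving_coord, block_len in *. lia.
Qed.

Definition stair_value (a x0 : R) (t : Z) (j : nat) (x : R) : R :=
  if in_block a j
  then run_base a x0 + step a * stair_piece (block_len a) (j - block_lo a) t (stair_pos a x)
  else Pt j x0.

Lemma Pstair_on_piece a x0 x t j : ~ regular a -> run a x0 -> run a x -> (1 <= j <= n)%nat ->
  IZR t <= stair_pos a x <= IZR t + 1 -> Pstair j x = stair_value a x0 t j x.
Proof.
  intros Ha H0 Hx Hj Ht. rewrite (Pstair_on_run a x0 x j Ha H0 Hx Hj). unfold stair_value.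
  destruct (in_block a j) eqn:E; auto. apply in_block_spec in E.
  destruct (block_range a x0 H0) as [_ [_ Hk]].
  rewrite (stair_eq_piece (block_len a) Hk (j - block_lo a) t); auto. unfold block_len; lia.
Qed.

Lemma stair_value_affine a x0 t j x y : run a x0 ->
  stair_value a x0 t j x = stair_value a x0 t j y + kron j (moving_coord a t) * (x - y).
Proof.
  intros H0. destruct (step_spec_holds a x0 H0) as [Hh _].
  destruct (moving_coord_range a x0 t H0) as [Hm Hmb].
  unfold stair_value. destruct (in_block a j) eqn:E.
  - apply in_block_spec in E.
    replace (kron j (moving_coord a t)) with (kron (j - block_lo a) (block_len a - 1 - stage (block_len a) t)).
    2:{ unfold kron, moving_coord, block_len in *.
        destruct (Nat.eq_dec j (block_hi a - stage (block_hi a - block_lo a + 1) t));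
        destruct (Nat.eq_dec (j - block_lo a)
                    (block_hi a - block_lo a + 1 - 1 - stage (block_hi a - block_lo a + 1) t));
        auto; lia. }
    replace (x - y) with (step a * (stair_pos a x - stair_pos a y)) by (unfold stair_pos; field; lra).
    rewrite <- Rmult_assoc, (Rmult_comm _ (step a)), Rmult_assoc, <- stair_piece_affine. ring.
  - rewrite kron_offdiag; [ring|]. intros ->. apply (in_block_false a _ E Hmb).
Qed.

Lemma stair_pos_shift a x y : step a > 0 -> stair_pos a x = stair_pos a y + (x - y) / step a.
Proof. intros Hh. unfold stair_pos. field. lra. Qed.

Lemma Pstair_left_germ_of_piece a x0 t q e : ~ regular a -> run a x0 -> e > 0 -> I q ->
  (forall x, q - e < x < q -> run a x /\ IZR t <= stair_pos a x <= IZR t + 1) ->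
  (forall j, (1 <= j <= n)%nat -> Pstair j q = stair_value a x0 t j q) ->
  left_germ n I Pstair q (moving_coord a t).
Proof.
  intros Ha H0 He Hq Hpiece Hvq. exists e. split; auto. intros x Hx.
  destruct (Rle_lt_or_eq_dec x q (proj2 Hx)) as [Hlt | ->].
  - destruct (Hpiece x ltac:(lra)) as [Hrun Hw]. split; [apply (run_regular a x Hrun)|].
    intros j Hj. rewrite (Pstair_on_piece a x0 x t j), Hvq by auto. apply stair_value_affine; auto.
  - split; auto. intros j _. ring.
Qed.

Lemma Pstair_right_germ_of_piece a x0 t q e : ~ regular a -> run a x0 -> e > 0 -> I q ->
  (forall x, q < x < q + e -> run a x /\ IZR t <= stair_pos a x <= IZR t + 1) ->
  (forall j, (1 <= j <= n)%nat -> Pstair j q = stair_value a x0 t j q) ->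
  right_germ n I Pstair q (moving_coord a t).
Proof.
  intros Ha H0 He Hq Hpiece Hvq. exists e. split; auto. intros x Hx.
  destruct (Rle_lt_or_eq_dec q x (proj1 Hx)) as [Hlt | <-].
  - destruct (Hpiece x ltac:(lra)) as [Hrun Hw]. split; [apply (run_regular a x Hrun)|].
    intros j Hj. rewrite (Pstair_on_piece a x0 x t j), Hvq by auto. apply stair_value_affine; auto.
  - split; auto. intros j _. ring.
Qed.

Lemma Pstair_right_germ_regular q : regular q ->
  right_germ n I Pstair q (moving_coord (run_start q) (Zfloor (stair_pos (run_start q) q))).
Proof.
  intros Hq. destruct (run_start_spec q Hq) as [Ha Hrun]. set (a := run_start q) in *.
  destruct (step_spec_holds a q Hrun) as [Hh _].
  set (t := Zfloor (stair_pos a q)). pose proof (Zfloor_bound (stair_pos a q)) as Hb. fold t in Hb.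
  destruct (run_open a q Hrun) as [d [Hd Hopen]].
  pose proof (Rmin_l d (step a * (IZR t + 1 - stair_pos a q))).
  pose proof (Rmin_r d (step a * (IZR t + 1 - stair_pos a q))).
  apply (Pstair_right_germ_of_piece a q t q (Rmin d (step a * (IZR t + 1 - stair_pos a q)))); auto.
  - apply Rmin_glb_lt; [lra | apply Rmult_lt_0_compat; lra].
  - apply (proj1 Hq).
  - intros x Hx. split; [apply Hopen, Rabs_def1; lra|].
    rewrite (stair_pos_shift a x q Hh).
    pose proof (div_bounds (x - q) (step a) 0 (IZR t + 1 - stair_pos a q) Hh ltac:(lra)). lra.
  - intros j Hj. apply Pstair_on_piece; auto; lra.
Qed.

Lemma Pstair_left_germ_regular q t : regular q -> IZR t < stair_pos (run_start q) q <= IZR t + 1 ->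
  left_germ n I Pstair q (moving_coord (run_start q) t).
Proof.
  intros Hq Hb. destruct (run_start_spec q Hq) as [Ha Hrun]. set (a := run_start q) in *.
  destruct (step_spec_holds a q Hrun) as [Hh _].
  destruct (run_open a q Hrun) as [d [Hd Hopen]].
  pose proof (Rmin_l d (step a * (stair_pos a q - IZR t))).
  pose proof (Rmin_r d (step a * (stair_pos a q - IZR t))).
  apply (Pstair_left_germ_of_piece a q t q (Rmin d (step a * (stair_pos a q - IZR t)))); auto.
  - apply Rmin_glb_lt; [lra | apply Rmult_lt_0_compat; lra].
  - apply (proj1 Hq).
  - intros x Hx. split; [apply Hopen, Rabs_def1; lra|].
    rewrite (stair_pos_shift a x q Hh).
    pose proof (div_bounds (x - q) (step a) (- (stair_pos a q - IZR t)) 0 Hh ltac:(lra)). lra.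
  - intros j Hj. apply Pstair_on_piece; auto; lra.
Qed.

Lemma Pt_at_run_start q e x0 j : (1 <= j <= n)%nat -> I q -> e > 0 -> run q x0 ->
  (forall x, q < x < q + e -> run q x) -> Pt j q = run_value q x0 j q.
Proof.
  intros Hj Hq He H0 Hrun. apply (Pt_run_boundary q x0); auto. intros d Hd.
  exists (q + Rmin d e / 2). pose proof (Rmin_l d e); pose proof (Rmin_r d e).
  assert (0 < Rmin d e) by (apply Rmin_glb_lt; lra).
  split; [apply Hrun; lra | apply Rabs_def1; lra].
Qed.

Lemma Pt_at_run_end a q e x0 j : (1 <= j <= n)%nat -> I q -> e > 0 -> run a x0 ->
  (forall x, q - e < x < q -> run a x) -> Pt j q = run_value a x0 j q.
Proof.
  intros Hj Hq He H0 Hrun. apply (Pt_run_boundary a x0); auto. intros d Hd.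
  exists (q - Rmin d e / 2). pose proof (Rmin_l d e); pose proof (Rmin_r d e).
  assert (0 < Rmin d e) by (apply Rmin_glb_lt; lra).
  split; [apply Hrun; lra | apply Rabs_def1; lra].
Qed.

Lemma Pstair_right_germ_irregular q : I q -> ~ regular q -> (exists y, I y /\ q < y) ->
  right_germ n I Pstair q (block_hi q) /\
  exists x0, run q x0 /\ forall j, (1 <= j <= n)%nat -> right_deriv (Pt j) q (run_slope q j).
Proof.
  intros Hq Hnq Hy. destruct (run_after_irregular q Hq Hnq Hy) as [e [He Hrun]].
  assert (H0 : run q (q + e / 2)) by (apply Hrun; lra).
  destruct (step_spec_holds q _ H0) as [Hh _]. destruct (block_range q _ H0) as [Hr [_ Hk]].
  split.
  - replace (block_hi q) with (moving_coord q 0)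
      by (unfold moving_coord, stage; rewrite Zmod_0_l; simpl; lia).
    pose proof (Rmin_l e (step q)); pose proof (Rmin_r e (step q)).
    apply (Pstair_right_germ_of_piece q (q + e / 2) 0 q (Rmin e (step q))); auto.
    + apply Rmin_glb_lt; lra.
    + intros x Hx. split; [apply Hrun; lra|]. unfold stair_pos.
      pose proof (div_bounds (x - q) (step q) 0 1 Hh ltac:(lra)). simpl; lra.
    + intros j Hj. rewrite Pstair_irregular by auto.
      rewrite (Pt_at_run_start q e (q + e / 2) j) by auto.
      unfold run_value, stair_value. destruct (in_block q j) eqn:E; auto.
      apply in_block_spec in E. unfold stair_pos. rewrite Rminus_diag, !Rdiv_0_l.
      rewrite stair_piece_origin by (auto; unfold block_len; lia). unfold Rdiv. ring.
  - exists (q + e / 2). split; auto. intros j Hj. apply (right_deriv_of_right_affine _ _ _ e He).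
    intros x Hx. destruct (Rle_lt_or_eq_dec q x (proj1 Hx)) as [Hlt | <-]; [|ring].
    rewrite (Pt_at_run_start q e (q + e / 2) j Hj Hq He H0 Hrun).
    rewrite (Pt_on_run q (q + e / 2) x j H0 (Hrun x ltac:(lra)) Hj). apply run_value_affine.
Qed.

Lemma Pstair_left_germ_irregular q : I q -> ~ regular q -> (exists y, I y /\ y < q) ->
  exists a x0, run a x0 /\ left_germ n I Pstair q (block_lo a) /\
    forall j, (1 <= j <= n)%nat -> left_deriv (Pt j) q (run_slope a j).
Proof.
  intros Hq Hnq Hy. destruct (run_before_irregular q Hq Hnq Hy) as [a [e [He [Ha [Hrun Hlub]]]]].
  assert (H0 : run a (q - e / 2)) by (apply Hrun; lra).
  destruct (step_spec_holds a _ H0) as [Hh [_ Hrounds]]. destruct (Hrounds q Hlub) as [N [_ Hlen]].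
  destruct (block_range a _ H0) as [Hr [_ Hk]].
  assert (Hk0 : INR (block_len a) > 0) by (apply lt_0_INR; lia).
  exists a, (q - e / 2). split; [auto | split].
  - set (t := (Z.of_nat (block_len a) * Z.of_nat N - 1)%Z).
    replace (block_lo a) with (moving_coord a t)
      by (unfold moving_coord, t; rewrite stage_last_round by auto; unfold block_len; lia).
    assert (Hwq : stair_pos a q = INR (block_len a) * INR N)
      by (unfold stair_pos; rewrite Hlen; field; lra).
    assert (Ht : IZR t + 1 = INR (block_len a) * INR N).
    { unfold t. rewrite minus_IZR, mult_IZR, <- !INR_IZR_INZ. simpl; ring. }
    pose proof (Rmin_l e (step a)); pose proof (Rmin_r e (step a)).
    apply (Pstair_left_germ_of_piece a (q - e / 2) t q (Rmin e (step a))); auto.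
    + apply Rmin_glb_lt; lra.
    + intros x Hx. split; [apply Hrun; lra|]. rewrite (stair_pos_shift a x q Hh).
      pose proof (div_bounds (x - q) (step a) (-1) 0 Hh ltac:(lra)). lra.
    + intros j Hj.
      rewrite Pstair_irregular, (Pt_at_run_end a q e (q - e / 2) j Hj Hq He H0 Hrun) by auto.
      unfold run_value, stair_value. destruct (in_block a j) eqn:E; auto.
      apply in_block_spec in E. rewrite Hwq. unfold t.
      rewrite stair_piece_round_end by (auto; unfold block_len; lia).
      rewrite Hlen. field. lra.
  - intros j Hj. apply (left_deriv_of_left_affine _ _ _ e He).
    intros x Hx. destruct (Rle_lt_or_eq_dec x q (proj2 Hx)) as [Hlt | ->]; [|ring].
    rewrite (Pt_at_run_end a q e (q - e / 2) j Hj Hq He H0 Hrun).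
    rewrite (Pt_on_run a (q - e / 2) x j H0 (Hrun x ltac:(lra)) Hj). apply run_value_affine.
Qed.

Lemma Pstair_left_germ q : I q -> (exists x, I x /\ x < q) ->
  exists r, (1 <= r <= n)%nat /\ left_germ n I Pstair q r.
Proof.
  intros Hq Hl. destruct (classic (regular q)) as [Hreg | Hnreg].
  - destruct (run_start_spec q Hreg) as [_ Hrun].
    pose proof (Zfloor_bound (stair_pos (run_start q) q)) as Hb.
    destruct (Rle_lt_or_eq_dec _ _ (proj1 Hb)) as [Hlt | Heq].
    + exists (moving_coord (run_start q) (Zfloor (stair_pos (run_start q) q))).
      split; [apply (moving_coord_range _ q _ Hrun) | apply Pstair_left_germ_regular; auto; lra].
    + exists (moving_coord (run_start q) (Zfloor (stair_pos (run_start q) q) - 1)).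
      split; [apply (moving_coord_range _ q _ Hrun)|].
      apply Pstair_left_germ_regular; auto. rewrite minus_IZR. simpl; lra.
  - destruct (Pstair_left_germ_irregular q Hq Hnreg Hl) as [a [x0 [H0 [Hg _]]]].
    exists (block_lo a). split; auto. destruct (block_range a x0 H0). lia.
Qed.

Lemma Pstair_right_germ q : I q -> (exists x, I x /\ q < x) ->
  exists r, (1 <= r <= n)%nat /\ right_germ n I Pstair q r.
Proof.
  intros Hq Hr. destruct (classic (regular q)) as [Hreg | Hnreg].
  - destruct (run_start_spec q Hreg) as [_ Hrun].
    exists (moving_coord (run_start q) (Zfloor (stair_pos (run_start q) q))).
    split; [apply (moving_coord_range _ q _ Hrun) | apply Pstair_right_germ_regular; auto].
  - destruct (Pstair_right_germ_irregular q Hq Hnreg Hr) as [Hg [x0 [H0 _]]].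
    exists (block_hi q). split; auto. destruct (block_range q x0 H0). lia.
Qed.

Lemma run_slope_in_block a j : (block_lo a <= j <= block_hi a)%nat ->
  run_slope a j = 1 / INR (block_hi a - block_lo a + 1).
Proof.
  intros Hj. unfold run_slope. replace (in_block a j) with true by (symmetry; apply in_block_spec; auto).
  unfold block_len, Rdiv. ring.
Qed.

Lemma run_slope_off_block a j : ~ (block_lo a <= j <= block_hi a)%nat -> run_slope a j = 0.
Proof.
  intros Hj. unfold run_slope. destruct (in_block a j) eqn:E; auto.
  apply in_block_spec in E. contradiction.
Qed.

(* At an irregular point the coordinates of [Pstair] are those of [Pt], and (G3) applies to the blocks
   of the two adjacent runs. *)
Lemma Pstair_compat_irregular q r s : I q -> ~ regular q ->
  left_germ n I Pstair q r -> right_germ n I Pstair q s ->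
  (r < s)%nat -> forall j, (r <= j <= s)%nat -> Pstair j q = Pstair r q.
Proof.
  intros Hq Hnq HL HR Hrs j Hj.
  assert (Hint : interior_pt I q) by (apply (interior_of_germs n I Pstair q r s); auto).
  destruct (interior_pt_sides I q Hint) as [Hl Hr].
  destruct (Pstair_left_germ_irregular q Hq Hnq Hl) as [a [x0 [H0 [HLa Hderl]]]].
  destruct (Pstair_right_germ_irregular q Hq Hnq Hr) as [HRq [x1 [H1 Hderr]]].
  destruct (block_range a x0 H0) as [Ha1 [Ha2 _]]. destruct (block_range q x1 H1) as [Hq1 [Hq2 _]].
  assert (r = block_lo a) by (symmetry; apply (left_germ_unique n I Pstair q); auto; lia).
  assert (s = block_hi q) by (symmetry; apply (right_germ_unique n I Pstair q); auto; lia).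
  subst r s.
  assert (Hnd : ~ diff_at n Pt q) by (intro Hd; apply Hnq; split; auto; intros [_ [C | C]]; auto).
  destruct Pt_generalized as [_ [_ [_ HG3]]].
  rewrite !Pstair_irregular by auto.
  apply (HG3 q Hint Hnd (block_lo a) (block_hi a) (block_lo q) (block_hi q)); try lia.
  - intros i Hi. rewrite <- (run_slope_in_block a i Hi). apply Hderl; lia.
  - intros i Hi Hni. rewrite <- (run_slope_off_block a i Hni). apply Hderl; lia.
  - intros i Hi. rewrite <- (run_slope_in_block q i Hi). apply Hderr; lia.
  - intros i Hi Hni. rewrite <- (run_slope_off_block q i Hni). apply Hderr; lia.
Qed.

(* At a regular point the left moving coordinate exceeds the right one, except at the start of a round,
   where all coordinates of the block are level. *)
Lemma Pstair_compat_regular q r s : regular q ->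
  left_germ n I Pstair q r -> right_germ n I Pstair q s ->
  (r < s)%nat -> forall j, (r <= j <= s)%nat -> Pstair j q = Pstair r q.
Proof.
  intros Hq HL HR Hrs j Hj.
  destruct (run_start_spec q Hq) as [Ha Hrun]. set (a := run_start q) in *.
  destruct (block_range a q Hrun) as [Hr1 [Hr2 Hk]].
  set (t := Zfloor (stair_pos a q)). pose proof (Zfloor_bound (stair_pos a q)) as Hb. fold t in Hb.
  pose proof (stage_lt _ Hk t).
  assert (Hs : s = moving_coord a t).
  { symmetry. apply (right_germ_unique n I Pstair q); auto; [apply (moving_coord_range a q t Hrun)|].
    apply Pstair_right_germ_regular; auto. }
  destruct (Rle_lt_or_eq_dec _ _ (proj1 Hb)) as [Hlt | Heq].
  - exfalso. assert (r = moving_coord a t); [|lia].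
    symmetry. apply (left_germ_unique n I Pstair q); auto; [apply (moving_coord_range a q t Hrun)|].
    apply Pstair_left_germ_regular; auto; fold a; lra.
  - assert (Hr : r = moving_coord a (t - 1)).
    { symmetry. apply (left_germ_unique n I Pstair q); auto; [apply (moving_coord_range a q _ Hrun)|].
      apply Pstair_left_germ_regular; auto. fold a. rewrite minus_IZR. simpl; lra. }
    destruct (stage_pred _ Hk t) as [Hpred0 Hpred1].
    destruct (Nat.eq_dec (stage (block_len a) t) 0) as [Z0 | Z0];
      [|exfalso; unfold moving_coord in Hr, Hs; rewrite (Hpred1 ltac:(lia)) in Hr; lia].
    unfold moving_coord in Hr, Hs. rewrite (Hpred0 Z0) in Hr. rewrite Z0 in Hs. unfold block_len in *.
    assert (Hlevel : forall i, (block_lo a <= i <= block_hi a)%nat ->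
      Pstair i q = run_base a q + step a * IZR (t / Z.of_nat (block_len a))).
    { intros i Hi. rewrite (Pstair_on_piece a q q t i) by (auto; try lia; lra).
      unfold stair_value. replace (in_block a i) with true by (symmetry; apply in_block_spec; auto).
      rewrite <- Heq, stair_piece_round_start by (auto; unfold block_len; lia). reflexivity. }
    rewrite !Hlevel; auto; lia.
Qed.

Lemma Pstair_germ_compat q r s : I q -> left_germ n I Pstair q r -> right_germ n I Pstair q s ->
  (r < s)%nat -> forall j, (r <= j <= s)%nat -> Pstair j q = Pstair r q.
Proof.
  intros Hq. destruct (classic (regular q)).
  - apply Pstair_compat_regular; auto.
  - apply Pstair_compat_irregular; auto.
Qed.

Lemma Pt_on_run_block a x0 x j : run a x0 -> run a x -> (block_lo a <= j <= block_hi a)%nat ->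
  Pt j x = run_base a x0 + (x - a) / INR (block_len a).
Proof.
  intros H0 Hx Hj. destruct (block_range a x0 H0) as [Hr [Hrn _]].
  rewrite (Pt_on_run a x0 x j H0 Hx) by lia. unfold run_value.
  replace (in_block a j) with true by (symmetry; apply in_block_spec; auto). reflexivity.
Qed.

Lemma Pt_on_run_off_block a x0 x j : run a x0 -> run a x -> (1 <= j <= n)%nat ->
  ~ (block_lo a <= j <= block_hi a)%nat -> Pt j x = Pt j x0.
Proof.
  intros H0 Hx Hj Hoff. rewrite (Pt_on_run a x0 x j H0 Hx Hj). unfold run_value.
  replace (in_block a j) with false
    by (symmetry; apply Bool.not_true_iff_false; rewrite in_block_spec; auto).
  reflexivity.
Qed.

Lemma stair_pos_nonneg a x : run a x -> 0 <= stair_pos a x.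
Proof.
  intros Hx. destruct (step_spec_holds a x Hx) as [Hh _]. destruct Hx as [Hax _].
  unfold stair_pos. apply Rmult_le_pos; [lra | apply Rlt_le, Rinv_0_lt_compat; lra].
Qed.

Lemma Pstair_minus_Pt a x j : ~ regular a -> run a x -> (1 <= j <= n)%nat ->
  Pstair j x - Pt j x = if in_block a j
    then step a * (stair (block_len a) (j - block_lo a) (stair_pos a x)
                   - stair_pos a x / INR (block_len a))
    else 0.
Proof.
  intros Ha Hrun Hj. destruct (step_spec_holds a x Hrun) as [Hh _].
  destruct (block_range a x Hrun) as [_ [_ Hk]].
  assert (INR (block_len a) > 0) by (apply lt_0_INR; lia).
  rewrite (Pstair_on_run a x x j Ha Hrun Hrun Hj), (Pt_on_run a x x j Hrun Hrun Hj).
  unfold run_value, stair_pos. destruct (in_block a j); [field; lra | ring].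
Qed.

Lemma Pstair_close q j : I q -> (1 <= j <= n)%nat -> Rabs (Pt j q - Pstair j q) <= eps.
Proof.
  intros Hq Hj. destruct (classic (regular q)) as [Hreg | Hnreg].
  - destruct (run_start_spec q Hreg) as [Ha Hrun]. set (a := run_start q) in *.
    rewrite Rabs_minus_sym, (Pstair_minus_Pt a q j Ha Hrun Hj).
    destruct (step_spec_holds a q Hrun) as [Hh [Hle _]]. destruct (block_range a q Hrun) as [_ [_ Hk]].
    destruct (in_block a j); [|rewrite Rabs_R0; lra].
    rewrite Rabs_mult, Rabs_right by lra.
    pose proof (stair_near _ Hk (j - block_lo a) (stair_pos a q)). nra.
  - rewrite Pstair_irregular, Rminus_diag, Rabs_R0 by auto. lra.
Qed.

Lemma run_base_nonneg a x0 : run a x0 -> block_lo a = 1%nat -> 0 <= run_base a x0.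
Proof.
  intros H0 Hlo. destruct Pt_generalized as [_ [HG1 _]].
  destruct (block_range a x0 H0) as [Hr [Hrn Hk]].
  apply (le_of_le_right_limit a x0 _ _ (INR (block_len a))); [apply H0 | apply lt_0_INR; lia|].
  intros x Hx. assert (Hrun : run a x) by (apply (run_down a x0); auto).
  destruct (HG1 x (proj1 (run_regular a x Hrun))) as [Hpos _].
  rewrite <- Hlo, (Pt_on_run_block a x0 x) in Hpos by (auto; lia). exact Hpos.
Qed.

Lemma run_base_above_previous a x0 : run a x0 -> (2 <= block_lo a)%nat ->
  Pt (block_lo a - 1) x0 <= run_base a x0.
Proof.
  intros H0 Hlo. destruct Pt_generalized as [_ [HG1 _]].
  destruct (block_range a x0 H0) as [Hr [Hrn Hk]].
  apply (le_of_le_right_limit a x0 _ _ (INR (block_len a))); [apply H0 | apply lt_0_INR; lia|].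
  intros x Hx. assert (Hrun : run a x) by (apply (run_down a x0); auto).
  destruct (HG1 x (proj1 (run_regular a x Hrun))) as [_ [Hmono _]].
  specialize (Hmono (block_lo a - 1)%nat ltac:(lia)).
  replace (S (block_lo a - 1)) with (block_lo a) in Hmono by lia.
  rewrite (Pt_on_run_block a x0 x (block_lo a)), (Pt_on_run_off_block a x0 x (block_lo a - 1)) in Hmono
    by (auto; lia).
  exact Hmono.
Qed.

(* The run is bounded by the point where its block would reach the next coordinate, and it ends
   after a whole number [N] of rounds, whereas [q] lies strictly inside it. *)
Lemma stair_top_below_next a q : run a q -> (block_hi a < n)%nat ->
  run_base a q + step a * stair (block_len a) (block_hi a - block_lo a) (stair_pos a q)
  <= Pt (block_hi a + 1) q.
Proof.
  intros Hrun Hhi. destruct Pt_generalized as [_ [HG1 _]].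
  destruct (block_range a q Hrun) as [Hr [Hrn Hk]].
  destruct (step_spec_holds a q Hrun) as [Hh [_ Hrounds]].
  assert (Hk0 : INR (block_len a) > 0) by (apply lt_0_INR; lia).
  set (c := Pt (block_hi a + 1) q). set (V := run_base a q).
  assert (Hbound : forall x, run a x -> x <= a + INR (block_len a) * (c - V)).
  { intros x Hx. destruct (HG1 x (proj1 (run_regular a x Hx))) as [_ [Hmono _]].
    specialize (Hmono (block_hi a) ltac:(lia)).
    replace (S (block_hi a)) with (block_hi a + 1)%nat in Hmono by lia.
    rewrite (Pt_on_run_block a q x (block_hi a)), (Pt_on_run_off_block a q x (block_hi a + 1)) in Hmono
      by (auto; lia).
    fold c V in Hmono.
    assert ((x - a) / INR (block_len a) * INR (block_len a) = x - a) by (field; lra). nra. }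
  destruct (completeness (run a) ltac:(eexists; exact Hbound) ltac:(eauto)) as [b Hb].
  destruct (Hrounds b Hb) as [N [_ Hlen]].
  assert (Hba : b <= a + INR (block_len a) * (c - V)) by (apply Hb; exact Hbound).
  assert (Hqb : q < b).
  { destruct (run_open a q Hrun) as [d [Hd Hopen]].
    assert (Hd2 : run a (q + d / 2)) by (apply Hopen, Rabs_def1; lra).
    specialize (proj1 Hb _ Hd2). lra. }
  assert (Hw : stair_pos a q < INR (block_len a) * INR N).
  { unfold stair_pos. apply Rmult_lt_reg_r with (step a); auto.
    unfold Rdiv. rewrite Rmult_assoc, Rinv_l, Rmult_1_r by lra. lra. }
  pose proof (stair_le_rounds _ Hk (block_hi a - block_lo a) _ _ Hw).
  assert (INR N * step a <= c - V) by (apply Rmult_le_reg_l with (INR (block_len a)); nra).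
  nra.
Qed.

Lemma Pstair_first_nonneg a q : ~ regular a -> run a q -> 0 <= Pstair 1 q.
Proof.
  intros Ha Hrun. destruct Pt_generalized as [_ [HG1 _]].
  destruct (block_range a q Hrun) as [Hr [Hrn Hk]]. destruct (step_spec_holds a q Hrun) as [Hh _].
  rewrite (Pstair_on_run a q q 1 Ha Hrun Hrun) by lia.
  destruct (in_block a 1) eqn:E; [|apply (HG1 q (proj1 (run_regular a q Hrun)))].
  apply in_block_spec in E.
  pose proof (run_base_nonneg a q Hrun ltac:(lia)).
  pose proof (stair_nonneg _ Hk (1 - block_lo a) _ (stair_pos_nonneg a q Hrun)). nra.
Qed.

Lemma Pstair_monotone a q j : ~ regular a -> run a q -> (1 <= j < n)%nat ->
  Pstair j q <= Pstair (S j) q.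
Proof.
  intros Ha Hrun Hj. destruct Pt_generalized as [_ [HG1 _]].
  destruct (block_range a q Hrun) as [Hr [Hrn Hk]]. destruct (step_spec_holds a q Hrun) as [Hh _].
  pose proof (stair_pos_nonneg a q Hrun) as Hw.
  rewrite !(Pstair_on_run a q q _ Ha Hrun Hrun) by lia.
  destruct (in_block a j) eqn:Ej; destruct (in_block a (S j)) eqn:Ej1;
    [apply in_block_spec in Ej, Ej1 | apply in_block_spec in Ej; apply in_block_false in Ej1
    | apply in_block_false in Ej; apply in_block_spec in Ej1 | ].
  - replace (S j - block_lo a)%nat with (j - block_lo a + 1)%nat by lia.
    pose proof (stair_mono _ Hk (j - block_lo a) (stair_pos a q) ltac:(unfold block_len; lia)). nra.
  - assert (j = block_hi a) by lia. subst j.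
    replace (S (block_hi a)) with (block_hi a + 1)%nat by lia.
    apply stair_top_below_next; auto. lia.
  - assert (j = block_lo a - 1)%nat by lia. subst j.
    pose proof (run_base_above_previous a q Hrun ltac:(lia)).
    pose proof (stair_nonneg _ Hk (S (block_lo a - 1) - block_lo a) _ Hw). nra.
  - apply (HG1 q (proj1 (run_regular a q Hrun))); auto.
Qed.

Lemma Pstair_sum a q : ~ regular a -> run a q ->
  sum_f 1 n (fun j => Pstair j q) = sum_f 1 n (fun j => Pt j q).
Proof.
  intros Ha Hrun. destruct (block_range a q Hrun) as [Hr [Hrn Hk]].
  set (dev := fun p =>
    step a * (stair (block_len a) p (stair_pos a q) - stair_pos a q / INR (block_len a))).
  transitivity (sum_f 1 n (fun j => Pt j q) +
    sum_f 1 n (fun j => if in_block a j then dev (j - block_lo a)%nat else 0)).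
  - unfold sum_f. rewrite <- sum_plus. apply sum_eq. intros i Hi.
    pose proof (Pstair_minus_Pt a q (i + 1) Ha Hrun ltac:(lia)). unfold dev. lra.
  - unfold in_block. rewrite sum_f_block by lia.
    replace (block_hi a - block_lo a)%nat with (block_len a - 1)%nat by (unfold block_len; lia).
    unfold dev. rewrite stair_deviation_sum by auto. ring.
Qed.

Lemma Pstair_cond1 : cond1 n I Pstair.
Proof.
  intros q Hq. destruct Pt_generalized as [_ [HG1 _]].
  destruct (HG1 q Hq) as [Hpos [Hmono Hsum]].
  destruct (classic (regular q)) as [Hreg | Hnreg].
  - destruct (run_start_spec q Hreg) as [Ha Hrun].
    split; [|split].
    + apply (Pstair_first_nonneg (run_start q) q); auto.
    + intros j Hj. apply (Pstair_monotone (run_start q) q); auto.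
    + rewrite (Pstair_sum (run_start q) q); auto.
  - rewrite Pstair_irregular by auto. split; [auto | split].
    + intros j Hj. rewrite !Pstair_irregular by auto. auto.
    + transitivity (sum_f 1 n (fun j => Pt j q)); auto.
      unfold sum_f. apply sum_eq. intros i _. apply Pstair_irregular; auto.
Qed.

End Approximation.

Theorem mainTheorem6 (n : nat) (I : R -> Prop) (Pt : nat -> R -> R) (eps : R) :
  (2 <= n)%nat ->
  admissible_interval I ->
  gen_n_system n I Pt ->
  eps > 0 ->
  exists P : nat -> R -> R,
    n_system n I P /\
    forall q, I q -> forall j, (1 <= j <= n)%nat -> Rabs (Pt j q - P j q) <= eps.
Proof.
  intros _ HI HG Heps. exists (Pstair n I Pt eps). split.
  - apply n_system_of_germs.
    + apply Pstair_cond1; auto.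
    + apply Pstair_left_germ; auto.
    + apply Pstair_right_germ; auto.
    + apply Pstair_germ_compat; auto.
  - intros q Hq j Hj. apply Pstair_close; auto.
Qed.
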